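(* Let $h\in(0,2\pi)$, $\alpha>0$ and $T>0$ be constants. Let $k\colon[0,2\pi]\to(0,+\infty)$ be a twice continuously differentiable positive function with $k(0)=k(2\pi)$, $k'(0)=k'(2\pi)$, and let $\varphi\colon[-h,2\pi]\to[0,+\infty)$ be a twice continuously differentiable nonnegative function with $\int_0^{2\pi}\varphi(x)\,\mathrm{d}x=1$ and $\varphi(x)=\varphi(x+2\pi)$ for all $x\in[-h,0]$. Put $$\bar k=\max_{0\le x\le 2\pi}\max\{|k(x)|,|k'(x)|,|k''(x)|\}.$$ Define the sequence $(u^m)_{m\ge 0}$ of functions on $[0,2\pi]\times[0,T]$ by $u^0(x,t)=\varphi(x)$ and, for $m\ge0$, $u^{m+1}$ is the solution $v$ of the linear problem $$\frac{\partial v}{\partial t}-\alpha\frac{\partial^2 v}{\partial x^2}=\mathcal F u^m(x,t),\quad v(x,0)=\varphi(x),\quad v(0,t)=v(2\pi,t),\quad \frac{\partial v}{\partial x}(0,t)=\frac{\partial v}{\partial x}(2\pi,t),$$ for $0\le x\le 2\pi$, $0\le t\le T$, where $$\mathcal F u^m(x,t)=u^m(x,t)\bigl(k(x)\,u^m(x-h,t)-f[u^m(\cdot,t)]\bigr),\qquad f[u^m(\cdot,t)]=\int_0^{2\pi}k(x)\,u^m(x,t)\,u^m(x-h,t)\,\mathrm{d}x,$$ with the convention $u^m(x-h,t)=u^m(x-h+2\pi,t)$ whenever $x-h<0$. Then, if $\bar k$ is sufficiently small, the sequence of norms $\|u^m\|_{\mathbf C^{2,1}([0,2\pi]\times[0,T])}$,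 $m=0,1,2,\dots$, is uniformly bounded.
   Context: $\mathbf C^{2,1}([0,2\pi]\times[0,T])$ denotes the Banach space of continuous functions $w(x,t)$ on $[0,2\pi]\times[0,T]$ such that $\partial w/\partial x$, $\partial^2 w/\partial x^2$, $\partial w/\partial t$ are continuous on $[0,2\pi]\times[0,T]$ (continuity up to the boundary meaning the limits from the interior exist and are taken as boundary values), with norm $$\|w\|_{\mathbf C^{2,1}}=\max_{0\le x\le2\pi,\,0\le t\le T}\Bigl\{|w|+\Bigl|\tfrac{\partial w}{\partial x}\Bigr|+\Bigl|\tfrac{\partial^2 w}{\partial x^2}\Bigr|+\Bigl|\tfrac{\partial w}{\partial t}\Bigr|\Bigr\}.$$ $\mathbf C^{2}([0,2\pi])$ is defined analogously without $t$. ''Sufficiently small'' means: there is a threshold, depending on the remaining data ($\alpha$, $T$, $\varphi$), such that the conclusion holds whenever $\bar k$ is below it. *)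

From Stdlib Require Import Reals Lra.
From Coquelicot Require Import Coquelicot.
Open Scope R_scope.

Definition cont_on (a b : R) (f : R -> R) : Prop :=
  forall x, a <= x <= b -> forall eps, 0 < eps -> exists d, 0 < d /\
    forall y, a <= y <= b -> Rabs (y - x) < d -> Rabs (f y - f x) < eps.

(* f is in C^2([a,b]): f1, f2 are its first and second derivatives in the
   interior (a,b), and f, f1, f2 are continuous on the closed interval
   (so f1, f2 on [a,b] are the continuous extensions, i.e. the boundary
   values are the limits from the interior). *)
Definition C2_on (a b : R) (f f1 f2 : R -> R) : Prop :=
  (forall x, a < x < b -> is_derive f x (f1 x) /\ is_derive f1 x (f2 x)) /\
  cont_on a b f /\ cont_on a b f1 /\ cont_on a b f2.

Definition cont_rect (T : R) (w : R -> R -> R) : Prop :=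
  forall x t, 0 <= x <= 2 * PI -> 0 <= t <= T ->
  forall eps, 0 < eps -> exists d, 0 < d /\
    forall y s, 0 <= y <= 2 * PI -> 0 <= s <= T ->
      Rabs (y - x) < d -> Rabs (s - t) < d -> Rabs (w y s - w x t) < eps.

Definition C21 (T : R) (w wx wxx wt : R -> R -> R) : Prop :=
  (forall x t, 0 < x < 2 * PI -> 0 < t < T ->
     is_derive (fun y => w y t) x (wx x t) /\
     is_derive (fun y => wx y t) x (wxx x t) /\
     is_derive (fun s => w x s) t (wt x t)) /\
  cont_rect T w /\ cont_rect T wx /\ cont_rect T wxx /\ cont_rect T wt.

(* Pointwise quantity whose max over the rectangle is the C^{2,1} norm. *)
Definition C21_pt (w wx wxx wt : R -> R -> R) (x t : R) : R :=
  Rabs (w x t) + Rabs (wx x t) + Rabs (wxx x t) + Rabs (wt x t).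

Definition shift (h : R) (u : R -> R -> R) (x t : R) : R :=
  if Rlt_dec (x - h) 0 then u (x - h + 2 * PI) t else u (x - h) t.

Definition fnl (h : R) (k : R -> R) (u : R -> R -> R) (t : R) : R :=
  RInt (fun y => k y * u y t * shift h u y t) 0 (2 * PI).

Definition Fop (h : R) (k : R -> R) (u : R -> R -> R) (x t : R) : R :=
  u x t * (k x * shift h u x t - fnl h k u t).

Definition is_lin_solution (alpha T : R) (phi : R -> R) (g : R -> R -> R)
    (v : R -> R -> R) : Prop :=
  exists vx vxx vt : R -> R -> R,
    C21 T v vx vxx vt /\
    (forall x t, 0 <= x <= 2 * PI -> 0 <= t <= T ->
       vt x t - alpha * vxx x t = g x t) /\
    (forall x, 0 <= x <= 2 * PI -> v x 0 = phi x) /\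
    (forall t, 0 <= t <= T -> v 0 t = v (2 * PI) t /\ vx 0 t = vx (2 * PI) t).

(* After 2 pi-periodic extension in x, the linear problem has constant
   coefficients on the strip R x [0, T], so translates v(x + d, t) and their
   linear combinations solve it too, with the translated source. The parabolic
   maximum principle then bounds v, its first differences and its second
   differences by those of phi plus T times those of the source; dividing by d
   and d^2 and letting d -> 0 bounds v, v_x and v_xx, and the equation bounds
   v_t. If u^m, u^m_x and u^m_xx are bounded by a, the source F u^m has values
   and differences bounded by 28 kbar a^3. Taking a = 3p, where p bounds phi,
   phi' and phi'', and kbar so small that 28 kbar a^3 T <= p, the bound a
   passes from u^m to u^{m+1}. *)

From Stdlib Require Import Reals Lra Lia Classical ClassicalEpsilon.
From Coquelicot Require Import Coquelicot.
Open Scope R_scope.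

Ltac solve_abs :=
  unfold Rabs in *;
  repeat match goal with
  | |- context [Rcase_abs ?x] => destruct (Rcase_abs x)
  | H : context [Rcase_abs ?x] |- _ => destruct (Rcase_abs x)
  end; lra.

Lemma locally_of_ball (x : R) (P : R -> Prop) :
  (exists d, 0 < d /\ forall y, Rabs (y - x) < d -> P y) -> locally x P.
Proof. intros [d [Hd H]]. exists (mkposreal d Hd). exact H. Qed.

Lemma locally_interior (a b x : R) (P : R -> Prop) : a < x < b ->
  (forall y, a < y < b -> P y) -> locally x P.
Proof.
  intros Hx H. apply locally_of_ball. exists (Rmin (x - a) (b - x)). split.
  - apply Rmin_pos; lra.
  - intros y Hy. apply Rmin_Rgt_l in Hy. apply H. solve_abs.
Qed.

Lemma is_derive_eq (f : R -> R) (x l1 l2 : R) :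
  is_derive f x l1 -> is_derive f x l2 -> l1 = l2.
Proof. intros H1 H2. apply is_derive_unique in H1, H2. congruence. Qed.

Lemma PI_gt_1 : 1 < PI.
Proof. pose proof PI2_1. lra. Qed.

(** * Functions continuous on a closed interval *)

Lemma cont_on_sub (a b c d : R) (f : R -> R) :
  a <= c -> d <= b -> cont_on a b f -> cont_on c d f.
Proof.
  intros Hac Hdb Hf x Hx eps He. destruct (Hf x ltac:(lra) eps He) as [del [Hdel H]].
  exists del. split; [exact Hdel|]. intros y Hy. apply H. lra.
Qed.

Definition clamp (a b x : R) : R := Rmax a (Rmin b x).

Lemma clamp_in (a b x : R) : a <= b -> a <= clamp a b x <= b.
Proof. intros. unfold clamp, Rmax, Rmin. repeat destruct Rle_dec; lra. Qed.

Lemma clamp_id (a b x : R) : a <= x <= b -> clamp a b x = x.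
Proof. intros. unfold clamp, Rmax, Rmin. repeat destruct Rle_dec; lra. Qed.

Lemma clamp_1_lipschitz (a b x y : R) : a <= b ->
  Rabs (clamp a b x - clamp a b y) <= Rabs (x - y).
Proof. intros. unfold clamp, Rmax, Rmin. repeat destruct Rle_dec; solve_abs. Qed.

(* Composing with [clamp] turns relative continuity on [a,b] into continuity
   on all of R, which is what the Stdlib theorems below expect. *)
Lemma continuity_pt_clamp (a b : R) (f : R -> R) : a <= b -> cont_on a b f ->
  forall x, continuity_pt (fun y => f (clamp a b y)) x.
Proof.
  intros Hab Hf x. apply continuity_pt_locally. intros eps.
  destruct (Hf (clamp a b x) (clamp_in a b x Hab) eps (cond_pos eps)) as [d [Hd H]].
  apply locally_of_ball. exists d. split; [exact Hd|]. intros y Hy.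
  apply H; [apply clamp_in; exact Hab|].
  eapply Rle_lt_trans; [apply clamp_1_lipschitz; exact Hab | exact Hy].
Qed.

Lemma MVT_cont_on (a b : R) (f df : R -> R) : a < b -> cont_on a b f ->
  (forall x, a < x < b -> is_derive f x (df x)) ->
  exists c, a <= c <= b /\ f b - f a = df c * (b - a).
Proof.
  intros Hab Hf Hd.
  destruct (MVT_gen (fun y => f (clamp a b y)) a b df) as [c [Hc E]].
  - intros x Hx. rewrite Rmin_left, Rmax_right in Hx by lra.
    apply is_derive_ext_loc with f; [|apply Hd; exact Hx].
    apply (locally_interior a b); [exact Hx|]. intros y Hy.
    rewrite clamp_id by lra. reflexivity.
  - intros. apply continuity_pt_clamp; [lra | exact Hf].
  - rewrite Rmin_left, Rmax_right in Hc by lra. rewrite !clamp_id in E by lra.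
    exists c. split; assumption.
Qed.

Lemma MVT_everywhere (f df : R -> R) : (forall x, is_derive f x (df x)) ->
  forall a b, exists c, Rmin a b <= c <= Rmax a b /\ f b - f a = df c * (b - a).
Proof.
  intros Hd a b. apply MVT_gen; [intros; apply Hd|].
  intros x _. apply continuity_pt_filterlim, (ex_derive_continuous f x). exists (df x). apply Hd.
Qed.

Lemma MVT_open (g dg : R -> R) (a b : R) : (forall s, a < s < b -> is_derive g s (dg s)) ->
  forall u v, a < u < b -> a < v < b ->
  exists c, Rmin u v <= c <= Rmax u v /\ g v - g u = dg c * (v - u).
Proof.
  intros Hd u v Hu Hv.
  assert (Hin : forall s, Rmin u v <= s <= Rmax u v -> a < s < b).
  { intros s Hs. pose proof (Rmin_glb_lt u v a). pose proof (Rmax_lub_lt u v b). lra. }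
  apply MVT_gen.
  - intros s Hs. apply Hd, Hin. lra.
  - intros s Hs. apply continuity_pt_filterlim, (ex_derive_continuous g s).
    exists (dg s). apply Hd, Hin, Hs.
Qed.

Lemma cont_on_attains_max (a b : R) (f : R -> R) : a <= b -> cont_on a b f ->
  exists c, a <= c <= b /\ forall x, a <= x <= b -> f x <= f c.
Proof.
  intros Hab Hf.
  destruct (continuity_ab_maj (fun y => f (clamp a b y)) a b Hab) as [c [Hmax Hc]].
  { intros; apply continuity_pt_clamp; assumption. }
  exists c. split; [exact Hc|]. intros x Hx.
  specialize (Hmax x Hx). rewrite !clamp_id in Hmax by assumption. exact Hmax.
Qed.

Lemma cont_on_bounded (a b : R) (f : R -> R) : a <= b -> cont_on a b f ->
  exists M, forall x, a <= x <= b -> Rabs (f x) <= M.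
Proof.
  intros Hab Hf.
  assert (Habs : cont_on a b (fun x => Rabs (f x))).
  { intros x Hx eps He. destruct (Hf x Hx eps He) as [d [Hd H]].
    exists d. split; [exact Hd|]. intros y Hy Hyx.
    eapply Rle_lt_trans; [apply Rabs_triang_inv2 | apply H; assumption]. }
  destruct (cont_on_attains_max a b _ Hab Habs) as [c [_ H]]. exists (Rabs (f c)). exact H.
Qed.

Lemma cont_on_difference_quotient (a b : R) (f f1 : R -> R) :
  cont_on a b f -> cont_on a b f1 -> (forall x, a < x < b -> is_derive f x (f1 x)) ->
  forall y, a <= y <= b -> forall eps, 0 < eps -> exists d, 0 < d /\
    forall z, a <= z <= b -> z <> y -> Rabs (z - y) < d ->
      Rabs ((f z - f y) / (z - y) - f1 y) < eps.
Proof.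
  intros Hf Hf1 Hd y Hy eps He.
  destruct (Hf1 y Hy eps He) as [d [Hd0 H]]. exists d. split; [exact Hd0|].
  intros z Hz Hzy Hzd.
  assert (Hquot : forall u v, a <= u < v -> v <= b -> exists c, u <= c <= v /\
            (f v - f u) / (v - u) = f1 c).
  { intros u v Huv Hv. destruct (MVT_cont_on u v f f1) as [c [Hc E]].
    - lra.
    - apply (cont_on_sub a b); [lra | lra | exact Hf].
    - intros; apply Hd; lra.
    - exists c. split; [exact Hc|]. rewrite E. field. lra. }
  destruct (Rlt_or_le y z) as [Hyz | Hzy'].
  - destruct (Hquot y z) as [c [Hc ->]]; [lra | lra |].
    apply H; [lra | solve_abs].
  - destruct (Hquot z y) as [c [Hc E]]; [lra | lra |].
    replace ((f z - f y) / (z - y)) with (f1 c) by (rewrite <- E; field; lra).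
    apply H; [lra | solve_abs].
Qed.

(** * Reduction modulo 2 pi and periodic extension *)

Definition wrap (x : R) : R := x - 2 * PI * IZR (Int_part (x / (2 * PI))).

Lemma wrap_spec (x : R) : let n := Int_part (x / (2 * PI)) in
  2 * PI * IZR n <= x < 2 * PI * (IZR n + 1) /\ wrap x = x - 2 * PI * IZR n.
Proof.
  intros n. pose proof PI_gt_1. destruct (base_Int_part (x / (2 * PI))) as [H1 H2].
  split; [|reflexivity].
  assert (E : x = 2 * PI * (x / (2 * PI))) by (field; lra).
  fold n in H1, H2. split.
  - rewrite E at 1. apply Rmult_le_compat_l; lra.
  - rewrite E at 1. apply Rmult_lt_compat_l; lra.
Qed.

Lemma wrap_bounds (x : R) : 0 <= wrap x < 2 * PI.
Proof. destruct (wrap_spec x) as [H ->]. lra. Qed.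

Lemma wrap_on_period (n : Z) (y : R) : 2 * PI * IZR n <= y <= 2 * PI * (IZR n + 1) ->
  wrap y = y - 2 * PI * IZR n \/ (y = 2 * PI * (IZR n + 1) /\ wrap y = 0).
Proof.
  intros Hy. pose proof PI_gt_1.
  destruct (wrap_spec y) as [Hm ->]. set (m := Int_part (y / (2 * PI))) in *.
  assert (Hlt : IZR n < IZR (m + 1)).
  { rewrite plus_IZR. apply Rmult_lt_reg_l with (2 * PI); lra. }
  assert (Hle : IZR m <= IZR (n + 1)).
  { rewrite plus_IZR. apply Rmult_le_reg_l with (2 * PI); lra. }
  apply lt_IZR in Hlt. apply le_IZR in Hle.
  destruct (Z.eq_dec m n) as [-> | Hne]; [left; reflexivity|].
  assert (Em : m = (n + 1)%Z) by lia. rewrite Em, plus_IZR in *. right. lra.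
Qed.

Lemma wrap_id (y : R) : 0 <= y < 2 * PI -> wrap y = y.
Proof.
  intros Hy. destruct (wrap_on_period 0 y) as [E | [E _]]; simpl in *; lra.
Qed.

Lemma wrap_add_period (n : Z) (y : R) : wrap (y + 2 * PI * IZR n) = wrap y.
Proof.
  destruct (wrap_spec y) as [Hy Ey]. set (m := Int_part (y / (2 * PI))) in *.
  destruct (wrap_on_period (m + n) (y + 2 * PI * IZR n)) as [E | [E _]];
    rewrite plus_IZR in *; lra.
Qed.

Lemma wrap_add_2PI (y : R) : wrap (y + 2 * PI) = wrap y.
Proof. rewrite <- (wrap_add_period 1 y). f_equal. simpl. ring. Qed.

Lemma wrap_wrap_sub (x h : R) : wrap (wrap x - h) = wrap (x - h).
Proof.
  destruct (wrap_spec x) as [_ ->].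
  rewrite <- (wrap_add_period (- Int_part (x / (2 * PI))) (x - h)), opp_IZR.
  f_equal. ring.
Qed.

Lemma periodic_wrap_on_period (f : R -> R) : f 0 = f (2 * PI) ->
  forall (n : Z) y, 2 * PI * IZR n <= y <= 2 * PI * (IZR n + 1) ->
  f (wrap y) = f (y - 2 * PI * IZR n).
Proof.
  intros Hf n y Hy. destruct (wrap_on_period n y Hy) as [-> | [Ey ->]]; [reflexivity|].
  rewrite Hf, Ey. f_equal. ring.
Qed.

Lemma wrap_local (x : R) : exists r, 0 < r /\ forall y, Rabs (y - x) < r ->
  wrap y = wrap x + (y - x) \/ (wrap x = 0 /\ wrap y = 2 * PI + (y - x)).
Proof.
  pose proof PI_gt_1.
  destruct (wrap_spec x) as [Hx Ex]. set (n := Int_part (x / (2 * PI))) in *.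
  destruct (Req_dec (wrap x) 0) as [E0 | Hne].
  - exists (2 * PI). split; [lra|]. intros y Hy.
    destruct (Rle_or_lt x y) as [Hxy | Hxy].
    + left. destruct (wrap_on_period n y) as [E | [E _]]; solve_abs.
    + right. split; [exact E0|].
      destruct (wrap_on_period (n - 1) y) as [E | [E _]];
        rewrite minus_IZR in *; simpl in *; solve_abs.
  - pose proof (wrap_bounds x).
    exists (Rmin (wrap x) (2 * PI - wrap x)). split; [apply Rmin_pos; lra|].
    intros y Hy. apply Rmin_Rgt_l in Hy as [Hy1 Hy2]. left.
    destruct (wrap_on_period n y) as [E | [E _]]; solve_abs.
Qed.

Lemma is_derive_wrap (f f1 : R -> R) :
  cont_on 0 (2 * PI) f -> cont_on 0 (2 * PI) f1 ->
  (forall x, 0 < x < 2 * PI -> is_derive f x (f1 x)) ->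
  f 0 = f (2 * PI) -> f1 0 = f1 (2 * PI) ->
  forall x, is_derive (fun y => f (wrap y)) x (f1 (wrap x)).
Proof.
  intros Hf Hf1 Hd P0 P1 x. pose proof PI_gt_1 as HPI. pose proof (wrap_bounds x) as Hwx.
  apply is_derive_Reals. intros eps He.
  destruct (wrap_local x) as [r [Hr Hloc]].
  destruct (cont_on_difference_quotient 0 (2 * PI) f f1 Hf Hf1 Hd (wrap x) ltac:(lra) eps He)
    as [d0 [Hd0 H0]].
  destruct (cont_on_difference_quotient 0 (2 * PI) f f1 Hf Hf1 Hd (2 * PI) ltac:(lra) eps He)
    as [d1 [Hd1 H1]].
  assert (Hdel : 0 < Rmin r (Rmin d0 d1)) by (repeat apply Rmin_pos; assumption).
  exists (mkposreal _ Hdel). simpl. intros h Hh0 Hh.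
  apply Rmin_Rgt_l in Hh as [Hhr Hh]. apply Rmin_Rgt_l in Hh as [Hhd0 Hhd1].
  pose proof (wrap_bounds (x + h)) as Hb.
  destruct (Hloc (x + h) ltac:(replace (x + h - x) with h by ring; exact Hhr)) as [E | [E0 E]];
    replace (x + h - x) with h in E by ring.
  - replace h with (wrap (x + h) - wrap x) at 2 by lra.
    apply H0; [lra | lra | replace (wrap (x + h) - wrap x) with h by lra; exact Hhd0].
  - rewrite E0 in *. rewrite P0, P1.
    replace h with (wrap (x + h) - 2 * PI) at 2 by lra.
    apply H1; [lra | lra | replace (wrap (x + h) - 2 * PI) with h by lra; exact Hhd1].
Qed.

Lemma lipschitz_wrap (g g1 : R -> R) (L : R) : cont_on 0 (2 * PI) g ->
  (forall x, 0 < x < 2 * PI -> is_derive g x (g1 x)) ->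
  (forall x, 0 <= x <= 2 * PI -> Rabs (g1 x) <= L) -> g 0 = g (2 * PI) ->
  forall x y, Rabs (x - y) <= 2 -> Rabs (g (wrap x) - g (wrap y)) <= L * Rabs (x - y).
Proof.
  intros Hg Hd Hb Hper. pose proof PI_gt_1.
  assert (HL : 0 <= L) by (eapply Rle_trans; [apply Rabs_pos | apply (Hb 0); lra]).
  assert (Hbase : forall u v, 0 <= u < v -> v <= 2 * PI ->
            Rabs (g v - g u) <= L * Rabs (v - u)).
  { intros u v Huv Hv. destruct (MVT_cont_on u v g g1) as [c [Hc ->]].
    - lra.
    - apply (cont_on_sub 0 (2 * PI)); [lra | lra | exact Hg].
    - intros; apply Hd; lra.
    - rewrite Rabs_mult. apply Rmult_le_compat_r; [apply Rabs_pos | apply Hb; lra]. }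
  assert (Hperiod : forall (n : Z) u v, 2 * PI * IZR n <= u <= v -> v <= 2 * PI * (IZR n + 1) ->
            Rabs (g (wrap v) - g (wrap u)) <= L * Rabs (v - u)).
  { intros n u v Hu Hv.
    rewrite !(periodic_wrap_on_period g Hper n) by lra.
    destruct (Req_dec u v) as [-> | Hne]; [rewrite !Rminus_eq_0, Rabs_R0; lra|].
    replace (v - u) with ((v - 2 * PI * IZR n) - (u - 2 * PI * IZR n)) by ring.
    apply Hbase; lra. }
  (* Two points at distance at most 2 < 2 pi straddle at most one multiple of 2 pi. *)
  assert (Hordered : forall u v, u <= v -> v - u <= 2 ->
            Rabs (g (wrap v) - g (wrap u)) <= L * Rabs (v - u)).
  { intros u v Huv H2. destruct (wrap_spec u) as [Hu _].
    set (n := Int_part (u / (2 * PI))) in *. set (b := 2 * PI * (IZR n + 1)) in *.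
    destruct (Rle_or_lt v b) as [Hvb | Hvb]; [apply (Hperiod n); unfold b in *; lra|].
    replace (g (wrap v) - g (wrap u)) with ((g (wrap v) - g (wrap b)) + (g (wrap b) - g (wrap u)))
      by ring.
    eapply Rle_trans; [apply Rabs_triang|].
    replace (Rabs (v - u)) with (Rabs (v - b) + Rabs (b - u)) by solve_abs.
    rewrite Rmult_plus_distr_l. apply Rplus_le_compat.
    - apply (Hperiod (n + 1)%Z); rewrite plus_IZR; unfold b in *; lra.
    - apply (Hperiod n); unfold b in *; lra. }
  intros x y Hxy. destruct (Rle_or_lt y x) as [Hyx | Hxy'].
  - apply Hordered; solve_abs.
  - rewrite Rabs_minus_sym, (Rabs_minus_sym x). apply Hordered; solve_abs.
Qed.

(** * Bounds on a function and on its first and second differences *)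

(* A finite-difference form of a C^2 bound: unlike derivatives, differences
   of translates of a solution are controlled by the maximum principle. *)
Definition diff_bounded (L0 L1 L2 : R) (f : R -> R) : Prop :=
  (forall x, Rabs (f x) <= L0) /\
  (forall x y, Rabs (x - y) <= 1 -> Rabs (f x - f y) <= L1 * Rabs (x - y)) /\
  (forall x d, 0 <= d <= 1 -> Rabs (f (x + d) + f (x - d) - 2 * f x) <= L2 * d ^ 2).

Lemma diff_bounded_nonneg (L0 L1 L2 : R) (f : R -> R) :
  diff_bounded L0 L1 L2 f -> 0 <= L0 /\ 0 <= L1 /\ 0 <= L2.
Proof.
  intros [H0 [H1 H2]]. specialize (H0 0). specialize (H1 1 0). specialize (H2 0 1).
  rewrite Rminus_0_r, Rabs_R1 in H1. rewrite pow1 in H2.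
  pose proof (Rabs_pos (f 0)). pose proof (Rabs_pos (f 1 - f 0)).
  pose proof (Rabs_pos (f (0 + 1) + f (0 - 1) - 2 * f 0)). repeat split; lra.
Qed.

Lemma diff_bounded_step (L0 L1 L2 : R) (f : R -> R) (x d : R) :
  diff_bounded L0 L1 L2 f -> 0 <= d <= 1 ->
  Rabs (f (x + d) - f x) <= L1 * d /\ Rabs (f (x - d) - f x) <= L1 * d.
Proof.
  intros [_ [H1 _]] Hd. split.
  - replace d with (Rabs (x + d - x)) at 2 by (rewrite Rabs_pos_eq; lra).
    apply H1. rewrite Rabs_pos_eq; lra.
  - replace d with (Rabs (x - d - x)) at 2 by solve_abs.
    apply H1. solve_abs.
Qed.

Lemma diff_bounded_weaken (L0 L1 L2 M0 M1 M2 : R) (f : R -> R) :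
  diff_bounded L0 L1 L2 f -> L0 <= M0 -> L1 <= M1 -> L2 <= M2 -> diff_bounded M0 M1 M2 f.
Proof.
  intros [H0 [H1 H2]] A0 A1 A2. split; [|split].
  - intros x. eapply Rle_trans; [apply H0 | exact A0].
  - intros x y H. eapply Rle_trans; [apply H1; exact H|].
    apply Rmult_le_compat_r; [apply Rabs_pos | exact A1].
  - intros x d H. eapply Rle_trans; [apply H2; exact H|].
    apply Rmult_le_compat_r; [apply pow2_ge_0 | exact A2].
Qed.

Lemma diff_bounded_ext (L0 L1 L2 : R) (f g : R -> R) :
  (forall x, f x = g x) -> diff_bounded L0 L1 L2 f -> diff_bounded L0 L1 L2 g.
Proof.
  intros E [H0 [H1 H2]]. split; [|split]; intros; rewrite <- ?E; auto.
Qed.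

Lemma diff_bounded_const (c C : R) : Rabs c <= C -> diff_bounded C 0 0 (fun _ => c).
Proof.
  intros H. split; [|split]; intros.
  - exact H.
  - rewrite Rminus_eq_0, Rabs_R0. lra.
  - replace (c + c - 2 * c) with 0 by ring. rewrite Rabs_R0. lra.
Qed.

Lemma diff_bounded_shift (L0 L1 L2 h : R) (f : R -> R) :
  diff_bounded L0 L1 L2 f -> diff_bounded L0 L1 L2 (fun x => f (x - h)).
Proof.
  intros [H0 [H1 H2]]. split; [|split]; intros.
  - apply H0.
  - replace (x - y) with ((x - h) - (y - h)) by ring. apply H1.
    replace ((x - h) - (y - h)) with (x - y) by ring. assumption.
  - replace (x + d - h) with ((x - h) + d) by ring.
    replace (x - d - h) with ((x - h) - d) by ring. apply H2. assumption.
Qed.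

Lemma diff_bounded_add (L0 L1 L2 M0 M1 M2 : R) (f g : R -> R) :
  diff_bounded L0 L1 L2 f -> diff_bounded M0 M1 M2 g ->
  diff_bounded (L0 + M0) (L1 + M1) (L2 + M2) (fun x => f x + g x).
Proof.
  intros [F0 [F1 F2]] [G0 [G1 G2]]. split; [|split]; intros.
  - eapply Rle_trans; [apply Rabs_triang | apply Rplus_le_compat; auto].
  - replace (f x + g x - (f y + g y)) with ((f x - f y) + (g x - g y)) by ring.
    eapply Rle_trans; [apply Rabs_triang|].
    rewrite Rmult_plus_distr_r. apply Rplus_le_compat; auto.
  - replace (f (x + d) + g (x + d) + (f (x - d) + g (x - d)) - 2 * (f x + g x)) with
      ((f (x + d) + f (x - d) - 2 * f x) + (g (x + d) + g (x - d) - 2 * g x)) by ring.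
    eapply Rle_trans; [apply Rabs_triang|].
    rewrite Rmult_plus_distr_r. apply Rplus_le_compat; auto.
Qed.

Lemma Rabs_mult_le (a b A B : R) : Rabs a <= A -> Rabs b <= B -> Rabs (a * b) <= A * B.
Proof.
  intros. rewrite Rabs_mult. apply Rmult_le_compat; auto; apply Rabs_pos.
Qed.

(* Leibniz rule for differences: the second difference of f g is
   f D2g + g D2f plus the cross terms (D+f)(D+g) + (D-f)(D-g). *)
Lemma diff_bounded_mul (L0 L1 L2 M0 M1 M2 : R) (f g : R -> R) :
  diff_bounded L0 L1 L2 f -> diff_bounded M0 M1 M2 g ->
  diff_bounded (L0 * M0) (L0 * M1 + L1 * M0) (L0 * M2 + L2 * M0 + 2 * (L1 * M1))
    (fun x => f x * g x).
Proof.
  intros Hf Hg.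
  destruct (diff_bounded_nonneg _ _ _ _ Hf) as [l0 [l1 l2]].
  destruct (diff_bounded_nonneg _ _ _ _ Hg) as [m0 [m1 m2]].
  pose proof Hf as [F0 [F1 F2]]. pose proof Hg as [G0 [G1 G2]].
  split; [|split]; intros.
  - apply Rabs_mult_le; auto.
  - replace (f x * g x - f y * g y) with (f x * (g x - g y) + (f x - f y) * g y) by ring.
    eapply Rle_trans; [apply Rabs_triang|].
    replace ((L0 * M1 + L1 * M0) * Rabs (x - y))
      with (L0 * (M1 * Rabs (x - y)) + L1 * Rabs (x - y) * M0) by ring.
    apply Rplus_le_compat; apply Rabs_mult_le; auto.
  - destruct (diff_bounded_step _ _ _ f x d Hf H) as [Fp Fm].
    destruct (diff_bounded_step _ _ _ g x d Hg H) as [Gp Gm].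
    replace (f (x + d) * g (x + d) + f (x - d) * g (x - d) - 2 * (f x * g x)) with
      (f x * (g (x + d) + g (x - d) - 2 * g x) + (f (x + d) + f (x - d) - 2 * f x) * g x
       + ((f (x + d) - f x) * (g (x + d) - g x) + (f (x - d) - f x) * (g (x - d) - g x)))
      by ring.
    replace ((L0 * M2 + L2 * M0 + 2 * (L1 * M1)) * d ^ 2) with
      (L0 * (M2 * d ^ 2) + L2 * d ^ 2 * M0 + (L1 * d * (M1 * d) + L1 * d * (M1 * d)))
      by ring.
    eapply Rle_trans; [apply Rabs_triang|]. apply Rplus_le_compat.
    + eapply Rle_trans; [apply Rabs_triang|].
      apply Rplus_le_compat; apply Rabs_mult_le; auto.
    + eapply Rle_trans; [apply Rabs_triang|].
      apply Rplus_le_compat; apply Rabs_mult_le; auto.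
Qed.

Lemma diff_bounded_of_derive (f f1 : R -> R) (L0 L1 L2 : R) :
  (forall x, is_derive f x (f1 x)) ->
  (forall x, Rabs (f x) <= L0) -> (forall x, Rabs (f1 x) <= L1) ->
  (forall x y, Rabs (x - y) <= 2 -> Rabs (f1 x - f1 y) <= L2 * Rabs (x - y)) ->
  diff_bounded L0 L1 (2 * L2) f.
Proof.
  intros Hd B0 B1 B2. split; [|split]; [exact B0 | |].
  - intros x y _. destruct (MVT_everywhere f f1 Hd y x) as [c [_ ->]].
    rewrite Rabs_mult. apply Rmult_le_compat_r; [apply Rabs_pos | apply B1].
  - intros x d Hdd.
    destruct (MVT_everywhere f f1 Hd x (x + d)) as [c1 [Hc1 E1]].
    destruct (MVT_everywhere f f1 Hd x (x - d)) as [c2 [Hc2 E2]].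
    rewrite Rmin_left, Rmax_right in Hc1 by lra. rewrite Rmin_right, Rmax_left in Hc2 by lra.
    replace (f (x + d) + f (x - d) - 2 * f x) with ((f (x + d) - f x) + (f (x - d) - f x))
      by ring.
    rewrite E1, E2. replace (f1 c1 * (x + d - x) + f1 c2 * (x - d - x))
      with ((f1 c1 - f1 c2) * d) by ring.
    assert (HL2 : 0 <= L2).
    { specialize (B2 1 0). rewrite Rminus_0_r, Rabs_R1 in B2.
      pose proof (Rabs_pos (f1 1 - f1 0)). lra. }
    rewrite Rabs_mult, (Rabs_pos_eq d) by lra.
    replace (2 * L2 * d ^ 2) with (L2 * (2 * d) * d) by ring.
    apply Rmult_le_compat_r; [lra|].
    eapply Rle_trans; [apply B2; solve_abs|].
    apply Rmult_le_compat_l; [exact HL2 | solve_abs].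
Qed.

Lemma diff_bounded_wrap (f f1 f2 : R -> R) (L0 L1 L2 : R) :
  C2_on 0 (2 * PI) f f1 f2 -> f 0 = f (2 * PI) -> f1 0 = f1 (2 * PI) ->
  (forall x, 0 <= x <= 2 * PI -> Rabs (f x) <= L0 /\ Rabs (f1 x) <= L1 /\ Rabs (f2 x) <= L2) ->
  diff_bounded L0 L1 (2 * L2) (fun x => f (wrap x)).
Proof.
  intros [D [C0 [C1 C2]]] P0 P1 Hb.
  apply (diff_bounded_of_derive _ (fun x => f1 (wrap x))).
  - apply is_derive_wrap; auto. intros; apply D; assumption.
  - intros x. apply Hb. pose proof (wrap_bounds x). lra.
  - intros x. apply Hb. pose proof (wrap_bounds x). lra.
  - apply (lipschitz_wrap f1 f2 L2); auto; intros; apply D || apply Hb; assumption.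
Qed.

Lemma derive_bound_of_diff (F : R -> R) (x l C : R) : is_derive F x l ->
  (forall d, 0 < d <= 1 -> Rabs (F (x + d) - F x) <= C * d) -> Rabs l <= C.
Proof.
  intros Hd HB. apply le_epsilon. intros eps He.
  apply is_derive_Reals in Hd. destruct (Hd eps He) as [del Hdel].
  pose proof (cond_pos del). set (d := Rmin (del / 2) 1).
  assert (Hd0 : 0 < d <= 1) by (split; [apply Rmin_pos | apply Rmin_r]; lra).
  assert (Hd1 : d < del) by (eapply Rle_lt_trans; [apply Rmin_l | lra]).
  specialize (Hdel d ltac:(lra) ltac:(rewrite Rabs_pos_eq; lra)).
  assert (Hq : Rabs ((F (x + d) - F x) / d) <= C).
  { unfold Rdiv. rewrite Rabs_mult, Rabs_inv, (Rabs_pos_eq d) by lra.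
    apply Rmult_le_reg_r with d; [lra|].
    rewrite Rmult_assoc, Rinv_l by lra. rewrite Rmult_1_r. apply HB. exact Hd0. }
  replace l with ((F (x + d) - F x) / d - ((F (x + d) - F x) / d - l)) by ring.
  eapply Rle_trans; [apply Rabs_triang|]. rewrite Rabs_Ropp. lra.
Qed.

Lemma is_derive_symmetric_sum (F F1 : R -> R) (x s : R) : (forall y, is_derive F y (F1 y)) ->
  is_derive (fun s => F (x + s) + F (x - s)) s (F1 (x + s) - F1 (x - s)).
Proof.
  intros Hd. apply (is_derive_plus (fun s => F (x + s)) (fun s => F (x - s))).
  - replace (F1 (x + s)) with (1 * F1 (x + s)) by ring.
    apply (is_derive_comp F (fun s => x + s)); [apply Hd | auto_derive; [exact I | ring]].
  - replace (- F1 (x - s)) with (-1 * F1 (x - s)) by ring.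
    apply (is_derive_comp F (fun s => x - s)); [apply Hd | auto_derive; [exact I | ring]].
Qed.

(* With k = l - eps, psi(s) = F(x+s) + F(x-s) - 2F(x) - k s^2 vanishes at 0 and
   increases near 0, as psi'(s) = F1(x+s) - F1(x-s) - 2ks >= 0 there; so k <= C. *)
Lemma derive2_le_of_second_diff (F F1 : R -> R) (x l C r : R) : 0 < r ->
  (forall y, is_derive F y (F1 y)) -> is_derive F1 x l ->
  (forall d, 0 < d <= r -> F (x + d) + F (x - d) - 2 * F x <= C * d ^ 2) -> l <= C.
Proof.
  intros Hr Hd Hd1 HB. apply le_epsilon. intros eps He.
  apply is_derive_Reals in Hd1. destruct (Hd1 eps He) as [del Hdel].
  pose proof (cond_pos del). set (k := l - eps).
  set (psi := fun s => F (x + s) + F (x - s) - 2 * F x - k * s ^ 2).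
  set (dpsi := fun s => F1 (x + s) - F1 (x - s) - 2 * k * s).
  assert (Hpsi : forall s, is_derive psi s (dpsi s)).
  { intros s. unfold psi, dpsi.
    replace (F1 (x + s) - F1 (x - s) - 2 * k * s)
      with ((F1 (x + s) - F1 (x - s) - 0) - k * (2 * s)) by ring.
    apply (is_derive_minus (fun s => F (x + s) + F (x - s) - 2 * F x) (fun s => k * s ^ 2)).
    - apply (is_derive_minus (fun s => F (x + s) + F (x - s)) (fun _ => 2 * F x)).
      + apply is_derive_symmetric_sum. exact Hd.
      + auto_derive; [exact I | ring].
    - auto_derive; [exact I | ring]. }
  set (d := Rmin (del / 2) r).
  assert (Hd0 : 0 < d <= r) by (split; [apply Rmin_pos | apply Rmin_r]; lra).
  assert (Hd2 : d < del) by (eapply Rle_lt_trans; [apply Rmin_l | lra]).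
  destruct (MVT_everywhere psi dpsi Hpsi 0 d) as [c [Hc E]].
  rewrite Rmin_left, Rmax_right in Hc by lra.
  assert (Hdpsi : 0 <= dpsi c).
  { unfold dpsi. destruct (Req_dec c 0) as [-> | Hc0]; [rewrite Rplus_0_r, Rminus_0_r; lra|].
    pose proof (Hdel c Hc0 ltac:(rewrite Rabs_pos_eq; lra)) as Q1.
    pose proof (Hdel (- c) ltac:(lra) ltac:(rewrite Rabs_Ropp, Rabs_pos_eq; lra)) as Q2.
    replace (x + - c) with (x - c) in Q2 by ring.
    assert (A1 : k < (F1 (x + c) - F1 x) / c) by (unfold k; solve_abs).
    assert (A2 : k < (F1 x - F1 (x - c)) / c).
    { replace ((F1 x - F1 (x - c)) / c) with ((F1 (x - c) - F1 x) / - c) by (field; lra).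
      unfold k; solve_abs. }
    apply Rmult_lt_compat_r with (r := c) in A1; [|lra].
    apply Rmult_lt_compat_r with (r := c) in A2; [|lra].
    unfold Rdiv in A1, A2. rewrite Rmult_assoc, Rinv_l, Rmult_1_r in A1, A2 by lra. lra. }
  assert (Hpsi0 : psi 0 = 0) by (unfold psi; rewrite Rplus_0_r, Rminus_0_r; ring).
  assert (Hpsid : 0 <= psi d).
  { replace (psi d) with (psi d - psi 0) by (rewrite Hpsi0; ring).
    rewrite E. apply Rmult_le_pos; lra. }
  specialize (HB d Hd0). unfold psi, k in Hpsid.
  apply Rmult_le_reg_r with (d ^ 2); [apply pow_lt; lra | lra].
Qed.

Lemma derive2_bound_of_second_diff (F F1 : R -> R) (x l C : R) :
  (forall y, is_derive F y (F1 y)) -> is_derive F1 x l ->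
  (forall d, 0 < d <= 1 -> Rabs (F (x + d) + F (x - d) - 2 * F x) <= C * d ^ 2) ->
  Rabs l <= C.
Proof.
  intros Hd Hd1 HB. apply Rabs_le. split.
  - cut (- l <= C); [lra|].
    apply (derive2_le_of_second_diff (fun y => - F y) (fun y => - F1 y) x _ _ 1); [lra| | |].
    + intros y. exact (is_derive_opp F y (F1 y) (Hd y)).
    + exact (is_derive_opp F1 x l Hd1).
    + intros d Hd0. specialize (HB d Hd0). solve_abs.
  - apply (derive2_le_of_second_diff F F1 x _ _ 1); auto; [lra|].
    intros d Hd0. specialize (HB d Hd0). solve_abs.
Qed.

(** * Continuous functions on a closed rectangle *)

Definition cont2 (a b c d : R) (w : R -> R -> R) : Prop :=
  forall x t, a <= x <= b -> c <= t <= d ->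
  forall eps, 0 < eps -> exists del, 0 < del /\
    forall y s, a <= y <= b -> c <= s <= d ->
      Rabs (y - x) < del -> Rabs (s - t) < del -> Rabs (w y s - w x t) < eps.

Lemma cont2_uniform (a b c d : R) (w : R -> R -> R) : cont2 a b c d w ->
  forall eps, 0 < eps -> exists del, 0 < del /\
  forall x t y s, a <= x <= b -> c <= t <= d -> a <= y <= b -> c <= s <= d ->
    Rabs (x - y) < del -> Rabs (t - s) < del -> Rabs (w x t - w y s) < eps.
Proof.
  intros Hw eps He.
  assert (Hr : forall p : R * R, exists r, 0 < r /\
     (a <= fst p <= b -> c <= snd p <= d ->
      forall y s, a <= y <= b -> c <= s <= d ->
        Rabs (y - fst p) < r -> Rabs (s - snd p) < r ->
        Rabs (w y s - w (fst p) (snd p)) < eps / 2)).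
  { intros [u v]. destruct (classic (a <= u <= b /\ c <= v <= d)) as [[Hu Hv] | Hn].
    - destruct (Hw u v Hu Hv (eps / 2) ltac:(lra)) as [r [Hr H]]. exists r. auto.
    - exists 1. split; [lra|]. intros Hu Hv. simpl in *. tauto. }
  destruct (choice _ Hr) as [r Hr'].
  assert (Hpos : forall u v, 0 < r (u, v) / 2) by (intros u v; destruct (Hr' (u, v)); lra).
  destruct (compactness_value_2d a b c d (fun u v => mkposreal _ (Hpos u v))) as [del Hdel].
  exists del. split; [apply cond_pos|].
  intros x t y s Hx Ht Hy Hs Hxy Hts.
  specialize (Hdel x t Hx Ht). apply NNPP in Hdel.
  destruct Hdel as [u [v [Hu [Hv [H1 [H2 H3]]]]]]. simpl in H1, H2, H3.
  destruct (Hr' (u, v)) as [_ Huv]. simpl in Huv. pose proof (Hpos u v).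
  assert (A1 : Rabs (w x t - w u v) < eps / 2) by (apply Huv; auto; lra).
  assert (A2 : Rabs (w y s - w u v) < eps / 2) by (apply Huv; auto; solve_abs).
  replace (w x t - w y s) with ((w x t - w u v) - (w y s - w u v)) by ring.
  eapply Rle_lt_trans; [apply Rabs_triang|]. rewrite Rabs_Ropp. lra.
Qed.

Lemma cont2_attains_max (a b c d : R) (w : R -> R -> R) :
  a <= b -> c <= d -> cont2 a b c d w ->
  exists xs ts, a <= xs <= b /\ c <= ts <= d /\
    forall x t, a <= x <= b -> c <= t <= d -> w x t <= w xs ts.
Proof.
  intros Hab Hcd Hw.
  assert (Hx : forall t, exists x, c <= t <= d ->
            a <= x <= b /\ forall y, a <= y <= b -> w y t <= w x t).
  { intros t. destruct (classic (c <= t <= d)) as [Ht | Hn]; [|exists a; tauto].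
    destruct (cont_on_attains_max a b (fun x => w x t) Hab) as [x Hmax].
    - intros x Hx eps He. destruct (Hw x t Hx Ht eps He) as [del [Hd H]].
      exists del. split; [exact Hd|]. intros y Hy Hyx. apply H; auto.
      rewrite Rminus_eq_0, Rabs_R0. exact Hd.
    - exists x. auto. }
  destruct (choice _ Hx) as [xm Hxm].
  (* The profile t |-> max_x w(x, t) is continuous by uniform continuity of w. *)
  assert (Hm : cont_on c d (fun t => w (xm t) t)).
  { intros t Ht eps He. destruct (cont2_uniform a b c d w Hw eps He) as [del [Hd H]].
    exists del. split; [exact Hd|]. intros s Hs Hst.
    destruct (Hxm t Ht) as [Ht1 Ht2]. destruct (Hxm s Hs) as [Hs1 Hs2].
    assert (E1 := H (xm s) s (xm s) t Hs1 Hs Hs1 Ht ltac:(rewrite Rminus_eq_0, Rabs_R0; lra) Hst).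
    assert (E2 := H (xm t) s (xm t) t Ht1 Hs Ht1 Ht ltac:(rewrite Rminus_eq_0, Rabs_R0; lra) Hst).
    specialize (Hs2 (xm t) Ht1). specialize (Ht2 (xm s) Hs1). solve_abs. }
  destruct (cont_on_attains_max c d _ Hcd Hm) as [ts [Hts H]].
  exists (xm ts), ts. destruct (Hxm ts Hts) as [H1 _].
  repeat split; try apply H1; try apply Hts.
  intros x t Hx' Ht. eapply Rle_trans; [apply (proj2 (Hxm t Ht)); exact Hx' | apply H; exact Ht].
Qed.

Lemma cont2_restrict_minus_linear (a b c d c' d' K : R) (z : R -> R -> R) :
  cont2 a b c d z -> c <= c' -> d' <= d -> cont2 a b c' d' (fun x t => z x t - K * t).
Proof.
  intros Hz Hc Hd x t Hx Ht eps He.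
  destruct (Hz x t Hx ltac:(lra) (eps / 2) ltac:(lra)) as [del [Hdel H]].
  assert (HK : 0 < Rabs K + 1) by (pose proof (Rabs_pos K); lra).
  exists (Rmin del (eps / 2 / (Rabs K + 1))). split.
  { apply Rmin_pos; [exact Hdel | apply Rdiv_lt_0_compat; lra]. }
  intros y s Hy Hs Hyx Hst. apply Rmin_Rgt_l in Hyx as [Hyx _].
  apply Rmin_Rgt_l in Hst as [Hst1 Hst2].
  replace (z y s - K * s - (z x t - K * t)) with ((z y s - z x t) - K * (s - t)) by ring.
  eapply Rle_lt_trans; [apply Rabs_triang|]. rewrite Rabs_Ropp, Rabs_mult.
  assert (A1 : Rabs (z y s - z x t) < eps / 2) by (apply H; auto; lra).
  assert (A2 : Rabs K * Rabs (s - t) <= eps / 2).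
  { apply Rmult_lt_compat_l with (r := Rabs K + 1) in Hst2; [|exact HK].
    replace ((Rabs K + 1) * (eps / 2 / (Rabs K + 1))) with (eps / 2) in Hst2 by (field; lra).
    pose proof (Rabs_pos K). pose proof (Rabs_pos (s - t)). nra. }
  lra.
Qed.

Lemma near_interior (L x d : R) : 0 < L -> 0 <= x <= L -> 0 < d ->
  exists y, 0 < y < L /\ Rabs (y - x) < d.
Proof.
  intros HL Hx Hd. set (m := Rmin d L / 4).
  assert (Hm : 0 < m /\ m <= d / 4 /\ m <= L / 4).
  { unfold m. pose proof (Rmin_l d L). pose proof (Rmin_r d L).
    split; [apply Rdiv_lt_0_compat; [apply Rmin_pos|]|split]; lra. }
  destruct (Rlt_dec x (L / 2)).
  - exists (x + m). split; [lra | solve_abs].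
  - exists (x - m). split; [lra | solve_abs].
Qed.

Lemma cont_rect_bound_closure (T M : R) (w : R -> R -> R) : 0 < T -> cont_rect T w ->
  (forall x t, 0 < x < 2 * PI -> 0 < t < T -> Rabs (w x t) <= M) ->
  forall x t, 0 <= x <= 2 * PI -> 0 <= t <= T -> Rabs (w x t) <= M.
Proof.
  intros HT Hw Hb x t Hx Ht. pose proof PI_gt_1.
  destruct (Rle_or_lt (Rabs (w x t)) M) as [Hle | Hgt]; [exact Hle | exfalso].
  destruct (Hw x t Hx Ht (Rabs (w x t) - M) ltac:(lra)) as [d [Hd Hq]].
  destruct (near_interior (2 * PI) x d ltac:(lra) Hx Hd) as [y [Hy Hyx]].
  destruct (near_interior T t d HT Ht Hd) as [s [Hs Hst]].
  specialize (Hq y s ltac:(lra) ltac:(lra) Hyx Hst). specialize (Hb y s Hy Hs).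
  pose proof (Rabs_triang_inv (w x t) (w y s)). rewrite Rabs_minus_sym in Hq. lra.
Qed.

Lemma C21_interior_unique (T : R) (w wx wxx wt wx' wxx' wt' : R -> R -> R) :
  C21 T w wx wxx wt -> C21 T w wx' wxx' wt' ->
  forall x t, 0 < x < 2 * PI -> 0 < t < T ->
    wx x t = wx' x t /\ wxx x t = wxx' x t /\ wt x t = wt' x t.
Proof.
  intros [D _] [D' _].
  assert (Ex : forall x t, 0 < x < 2 * PI -> 0 < t < T -> wx x t = wx' x t).
  { intros x t Hx Ht. apply (is_derive_eq (fun y => w y t) x); [apply D | apply D']; auto. }
  intros x t Hx Ht. split; [|split]; [exact (Ex x t Hx Ht) | |].
  - apply (is_derive_eq (fun y => wx y t) x); [apply D; auto|].
    apply is_derive_ext_loc with (fun y => wx' y t); [|apply D'; auto].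
    apply (locally_interior 0 (2 * PI)); [exact Hx|]. intros y Hy. symmetry. apply Ex; auto.
  - apply (is_derive_eq (fun s => w x s) t); [apply D | apply D']; auto.
Qed.

(** * The maximum principle for periodic solutions *)

Definition cont_strip (T : R) (W : R -> R -> R) : Prop :=
  forall x t, 0 <= t <= T -> forall eps, 0 < eps -> exists del, 0 < del /\
    forall y s, 0 <= s <= T -> Rabs (y - x) < del -> Rabs (s - t) < del ->
      Rabs (W y s - W x t) < eps.

Lemma cont_strip_cont2 (T : R) (W : R -> R -> R) : cont_strip T W -> cont2 0 (2 * PI) 0 T W.
Proof.
  intros H x t _ Ht eps He. destruct (H x t Ht eps He) as [d [Hd Hw]].
  exists d. split; [exact Hd|]. intros y s _ Hs. apply Hw. exact Hs.
Qed.

Record periodic_solution (alpha T : R) (V VX VXX VT G : R -> R -> R) : Prop := {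
  psol_periodic : forall x t, 0 <= t <= T -> V (x + 2 * PI) t = V x t;
  psol_dx : forall x t, 0 < t < T -> is_derive (fun y => V y t) x (VX x t);
  psol_dxx : forall x t, 0 < t < T -> is_derive (fun y => VX y t) x (VXX x t);
  psol_dt : forall x t, 0 < t < T -> is_derive (fun s => V x s) t (VT x t);
  psol_cont : cont_strip T V;
  psol_eq : forall x t, 0 < t < T -> VT x t - alpha * VXX x t = G x t }.

Arguments psol_periodic {alpha T V VX VXX VT G}.
Arguments psol_dx {alpha T V VX VXX VT G}.
Arguments psol_dxx {alpha T V VX VXX VT G}.
Arguments psol_dt {alpha T V VX VXX VT G}.
Arguments psol_cont {alpha T V VX VXX VT G}.
Arguments psol_eq {alpha T V VX VXX VT G}.

Lemma is_derive_nonneg_at_left_max (g : R -> R) (t l r : R) : 0 < r ->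
  is_derive g t l -> (forall s, t - r < s < t -> g s <= g t) -> 0 <= l.
Proof.
  intros Hr Hd Hm. apply is_derive_Reals in Hd.
  destruct (Rle_or_lt 0 l) as [Hl | Hl]; [exact Hl | exfalso].
  destruct (Hd (- l / 2) ltac:(lra)) as [del Hdel]. pose proof (cond_pos del).
  set (h := - Rmin (del / 2) (r / 2)).
  assert (Hh : 0 < - h < del /\ - h < r).
  { unfold h. rewrite Ropp_involutive. pose proof (Rmin_l (del / 2) (r / 2)).
    pose proof (Rmin_r (del / 2) (r / 2)). pose proof (Rmin_pos (del / 2) (r / 2)). lra. }
  specialize (Hdel h ltac:(lra) ltac:(rewrite Rabs_left; lra)).
  specialize (Hm (t + h) ltac:(lra)).
  assert (Hq : 0 <= (g (t + h) - g t) / h).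
  { replace ((g (t + h) - g t) / h) with ((g t - g (t + h)) / - h) by (field; lra).
    apply Rmult_le_pos; [lra | left; apply Rinv_0_lt_compat; lra]. }
  solve_abs.
Qed.

Lemma periodic_le_near_period (f : R -> R) (M : R) : (forall x, f (x + 2 * PI) = f x) ->
  (forall u, 0 <= u <= 2 * PI -> f u <= M) -> forall w, - 2 * PI <= w <= 4 * PI -> f w <= M.
Proof.
  intros Hp Hin w Hw.
  destruct (Rlt_or_le w 0) as [Hw0 | Hw0]; [rewrite <- Hp; apply Hin; lra|].
  destruct (Rle_or_lt w (2 * PI)) as [Hw1 | Hw1]; [apply Hin; lra|].
  replace w with ((w - 2 * PI) + 2 * PI) by ring. rewrite Hp. apply Hin. lra.
Qed.

Section MaximumPrinciple.

Variables alpha T : R.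
Variables V VX VXX VT G : R -> R -> R.
Hypothesis alpha_pos : 0 < alpha.
Hypothesis HV : periodic_solution alpha T V VX VXX VT G.

(* A maximum of V - B t over [0, 2 pi] x [0, t1] exceeding A lies at some t > 0;
   there V_xx <= 0 (by periodicity it is a local maximum in x) and V_t >= B,
   contradicting G = V_t - alpha V_xx < B. *)
Lemma max_principle_strict (A B : R) :
  (forall x t, 0 < t < T -> G x t < B) ->
  (forall x, 0 <= x <= 2 * PI -> V x 0 <= A) ->
  forall x t, 0 <= x <= 2 * PI -> 0 < t < T -> V x t <= A + B * t.
Proof.
  intros HG H0 x0 t1 Hx0 Ht1. pose proof PI_gt_1.
  set (y := fun x t => V x t - B * t).
  assert (Hcy : cont2 0 (2 * PI) 0 t1 y).
  { apply (cont2_restrict_minus_linear 0 (2 * PI) 0 T); [|lra | lra].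
    apply cont_strip_cont2, (psol_cont HV). }
  destruct (cont2_attains_max 0 (2 * PI) 0 t1 y ltac:(lra) ltac:(lra) Hcy)
    as [xs [ts [Hxs [Hts Hmax]]]].
  destruct (Rle_or_lt (y xs ts) A) as [Hle | Hgt].
  { specialize (Hmax x0 t1 Hx0 ltac:(lra)). unfold y in Hmax, Hle. lra. }
  exfalso.
  assert (Hts' : 0 < ts < T).
  { destruct (Req_dec ts 0) as [E | ]; [|lra].
    rewrite E in Hgt. unfold y in Hgt. specialize (H0 xs Hxs). lra. }
  assert (Hxmax : forall w, Rabs (w - xs) <= 1 -> V w ts <= V xs ts).
  { intros w Hw. apply (periodic_le_near_period (fun w => V w ts)); [| |solve_abs].
    - intros u. apply (psol_periodic HV). lra.
    - intros u Hu. specialize (Hmax u ts Hu ltac:(lra)). unfold y in Hmax. lra. }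
  assert (Hxx : VXX xs ts <= 0).
  { apply (derive2_le_of_second_diff (fun w => V w ts) (fun w => VX w ts) xs _ 0 1); [lra | | |].
    - intros w. apply (psol_dx HV). exact Hts'.
    - apply (psol_dxx HV). exact Hts'.
    - intros d Hd. rewrite Rmult_0_l.
      pose proof (Hxmax (xs + d) ltac:(solve_abs)). pose proof (Hxmax (xs - d) ltac:(solve_abs)).
      lra. }
  assert (Ht : 0 <= VT xs ts - B).
  { apply (is_derive_nonneg_at_left_max (fun s => V xs s - B * s) ts _ ts); [lra| |].
    - apply (is_derive_minus (fun s => V xs s) (fun s => B * s)).
      + apply (psol_dt HV). exact Hts'.
      + auto_derive; [exact I | ring].
    - intros s Hs. specialize (Hmax xs s Hxs ltac:(lra)). unfold y in Hmax. lra. }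
  specialize (HG xs ts Hts'). rewrite <- (psol_eq HV xs ts Hts') in HG. nra.
Qed.

Lemma max_principle (A B : R) :
  (forall x t, 0 < t < T -> G x t <= B) ->
  (forall x, 0 <= x <= 2 * PI -> V x 0 <= A) ->
  forall x t, 0 <= x <= 2 * PI -> 0 < t < T -> V x t <= A + B * t.
Proof.
  intros HG H0 x t Hx Ht. apply le_epsilon. intros eps He.
  replace (A + B * t + eps) with (A + (B + eps / t) * t) by (field; lra).
  apply max_principle_strict; auto.
  intros y s Hs. specialize (HG y s Hs). assert (0 < eps / t) by (apply Rdiv_lt_0_compat; lra). lra.
Qed.

End MaximumPrinciple.

Definition comb (c1 c2 c3 d : R) (W : R -> R -> R) (x t : R) : R :=
  c1 * W (x + d) t + c2 * W (x - d) t + c3 * W x t.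

Lemma cont_strip_comb (T c1 c2 c3 d : R) (W : R -> R -> R) :
  cont_strip T W -> cont_strip T (comb c1 c2 c3 d W).
Proof.
  intros HW x t Ht eps He.
  set (K := Rabs c1 + Rabs c2 + Rabs c3 + 1).
  assert (HK : 0 < K) by (unfold K; pose proof (Rabs_pos c1);
                          pose proof (Rabs_pos c2); pose proof (Rabs_pos c3); lra).
  assert (He' : 0 < eps / K) by (apply Rdiv_lt_0_compat; lra).
  destruct (HW (x + d) t Ht _ He') as [d1 [Hd1 H1]].
  destruct (HW (x - d) t Ht _ He') as [d2 [Hd2 H2]].
  destruct (HW x t Ht _ He') as [d3 [Hd3 H3]].
  exists (Rmin d1 (Rmin d2 d3)). split; [repeat apply Rmin_pos; assumption|].
  intros y s Hs Hyx Hst.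
  apply Rmin_Rgt_l in Hyx as [Hy1 Hyx]. apply Rmin_Rgt_l in Hyx as [Hy2 Hy3].
  apply Rmin_Rgt_l in Hst as [Hs1 Hst]. apply Rmin_Rgt_l in Hst as [Hs2 Hs3].
  assert (A1 : Rabs (W (y + d) s - W (x + d) t) <= eps / K).
  { left. apply H1; [exact Hs | replace (y + d - (x + d)) with (y - x) by ring; lra | lra]. }
  assert (A2 : Rabs (W (y - d) s - W (x - d) t) <= eps / K).
  { left. apply H2; [exact Hs | replace (y - d - (x - d)) with (y - x) by ring; lra | lra]. }
  assert (A3 : Rabs (W y s - W x t) <= eps / K) by (left; apply H3; [exact Hs | lra | lra]).
  unfold comb.
  replace (c1 * W (y + d) s + c2 * W (y - d) s + c3 * W y s
           - (c1 * W (x + d) t + c2 * W (x - d) t + c3 * W x t))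
    with (c1 * (W (y + d) s - W (x + d) t) + c2 * (W (y - d) s - W (x - d) t)
          + c3 * (W y s - W x t)) by ring.
  apply Rle_lt_trans with (Rabs c1 * (eps / K) + Rabs c2 * (eps / K) + Rabs c3 * (eps / K)).
  - eapply Rle_trans; [apply Rabs_triang|]. apply Rplus_le_compat;
      [eapply Rle_trans; [apply Rabs_triang | apply Rplus_le_compat] |];
      rewrite Rabs_mult; apply Rmult_le_compat_l; auto using Rabs_pos.
  - replace (Rabs c1 * (eps / K) + Rabs c2 * (eps / K) + Rabs c3 * (eps / K))
      with ((K - 1) * (eps / K)) by (unfold K; ring).
    replace eps with (K * (eps / K)) at 2 by (field; lra).
    apply Rmult_lt_compat_r; lra.
Qed.

Lemma periodic_solution_comb (alpha T c1 c2 c3 d : R) (V VX VXX VT G : R -> R -> R) :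
  periodic_solution alpha T V VX VXX VT G ->
  periodic_solution alpha T (comb c1 c2 c3 d V) (comb c1 c2 c3 d VX) (comb c1 c2 c3 d VXX)
    (comb c1 c2 c3 d VT) (comb c1 c2 c3 d G).
Proof.
  intros [Hp Dx Dxx Dt Hc Heq].
  assert (Hshift : forall (F : R -> R) F1 x, (forall y, is_derive F y (F1 y)) ->
            is_derive (fun y => c1 * F (y + d) + c2 * F (y - d) + c3 * F y) x
              (c1 * F1 (x + d) + c2 * F1 (x - d) + c3 * F1 x)).
  { intros F F1 x HF.
    assert (Hs : forall e, is_derive (fun y => F (y + e)) x (F1 (x + e))).
    { intros e. replace (F1 (x + e)) with (1 * F1 (x + e)) by ring.
      apply (is_derive_comp F (fun y => y + e)); [apply HF | auto_derive; [exact I | ring]]. }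
    apply (is_derive_plus (fun y => c1 * F (y + d) + c2 * F (y - d)) (fun y => c3 * F y));
      [apply (is_derive_plus (fun y => c1 * F (y + d)) (fun y => c2 * F (y - d))) |];
      apply is_derive_scal; [apply Hs | apply (Hs (- d)) | apply HF]. }
  split; unfold comb.
  - intros x t Ht.
    replace (x + 2 * PI + d) with ((x + d) + 2 * PI) by ring.
    replace (x + 2 * PI - d) with ((x - d) + 2 * PI) by ring. rewrite !Hp by exact Ht. reflexivity.
  - intros x t Ht. apply (Hshift (fun y => V y t) (fun y => VX y t)). intros; apply Dx; exact Ht.
  - intros x t Ht. apply (Hshift (fun y => VX y t) (fun y => VXX y t)). intros; apply Dxx; exact Ht.
  - intros x t Ht.
    apply (is_derive_plus (fun s => c1 * V (x + d) s + c2 * V (x - d) s) (fun s => c3 * V x s));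
      [apply (is_derive_plus (fun s => c1 * V (x + d) s) (fun s => c2 * V (x - d) s)) |];
      apply is_derive_scal, Dt; exact Ht.
  - apply cont_strip_comb. exact Hc.
  - intros x t Ht. rewrite <- !Heq by exact Ht. ring.
Qed.

Lemma max_principle_abs (alpha T A B : R) (V VX VXX VT G : R -> R -> R) :
  0 < alpha -> periodic_solution alpha T V VX VXX VT G ->
  (forall x t, 0 < t < T -> Rabs (G x t) <= B) ->
  (forall x, 0 <= x <= 2 * PI -> Rabs (V x 0) <= A) ->
  forall x t, 0 <= x <= 2 * PI -> 0 < t < T -> Rabs (V x t) <= A + B * T.
Proof.
  intros Ha HV HG H0 x t Hx Ht.
  assert (HB : 0 <= B) by (eapply Rle_trans; [apply Rabs_pos | apply (HG 0 t Ht)]).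
  assert (HBt : B * t <= B * T) by (apply Rmult_le_compat_l; lra).
  assert (Hu : V x t <= A + B * t).
  { apply (max_principle alpha T V VX VXX VT G Ha HV); auto.
    - intros y s Hs. specialize (HG y s Hs). solve_abs.
    - intros y Hy. specialize (H0 y Hy). solve_abs. }
  (* The lower bound applies the upper one to -V = comb 0 0 (-1) 0 V. *)
  assert (Hl : comb 0 0 (-1) 0 V x t <= A + B * t).
  { apply (max_principle alpha T _ _ _ _ _ Ha
             (periodic_solution_comb alpha T 0 0 (-1) 0 _ _ _ _ _ HV)); auto; unfold comb.
    - intros y s Hs. specialize (HG y s Hs). solve_abs.
    - intros y Hy. specialize (H0 y Hy). solve_abs. }
  unfold comb in Hl. solve_abs.
Qed.

Section SolutionBounds.

Variables alpha T p g : R.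
Variables V VX VXX VT G : R -> R -> R.
Hypothesis alpha_pos : 0 < alpha.
Hypothesis HV : periodic_solution alpha T V VX VXX VT G.
Hypothesis G_bounded : forall t, 0 < t < T -> diff_bounded g g g (fun x => G x t).
Hypothesis V0_bounded : diff_bounded p p (2 * p) (fun x => V x 0).

Lemma periodic_solution_bound (x t : R) : 0 <= x <= 2 * PI -> 0 < t < T ->
  Rabs (V x t) <= p + g * T.
Proof.
  apply (max_principle_abs alpha T p g V VX VXX VT G alpha_pos HV).
  - intros y s Hs. apply (G_bounded s Hs).
  - intros y _. apply V0_bounded.
Qed.

Lemma periodic_solution_dx_bound (x t : R) : 0 <= x <= 2 * PI -> 0 < t < T ->
  Rabs (VX x t) <= p + g * T.
Proof.
  intros Hx Ht.
  apply (derive_bound_of_diff (fun y => V y t) x); [apply (psol_dx HV); exact Ht|].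
  intros d Hd.
  replace (V (x + d) t - V x t) with (comb 1 0 (-1) d V x t) by (unfold comb; ring).
  replace ((p + g * T) * d) with (p * d + g * d * T) by ring.
  apply (max_principle_abs alpha T _ _ _ _ _ _ _ alpha_pos
           (periodic_solution_comb alpha T 1 0 (-1) d _ _ _ _ _ HV)); auto.
  - intros y s Hs. unfold comb.
    replace (1 * G (y + d) s + 0 * G (y - d) s + -1 * G y s) with (G (y + d) s - G y s) by ring.
    apply (diff_bounded_step g g g (fun x => G x s) y d (G_bounded s Hs)). lra.
  - intros y _. unfold comb.
    replace (1 * V (y + d) 0 + 0 * V (y - d) 0 + -1 * V y 0) with (V (y + d) 0 - V y 0) by ring.
    apply (diff_bounded_step p p (2 * p) (fun x => V x 0) y d V0_bounded). lra.
Qed.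

Lemma periodic_solution_dxx_bound (x t : R) : 0 <= x <= 2 * PI -> 0 < t < T ->
  Rabs (VXX x t) <= 2 * p + g * T.
Proof.
  intros Hx Ht.
  apply (derive2_bound_of_second_diff (fun y => V y t) (fun y => VX y t) x).
  - intros y. apply (psol_dx HV). exact Ht.
  - apply (psol_dxx HV). exact Ht.
  - intros d Hd.
    replace (V (x + d) t + V (x - d) t - 2 * V x t) with (comb 1 1 (-2) d V x t)
      by (unfold comb; ring).
    replace ((2 * p + g * T) * d ^ 2) with (2 * p * d ^ 2 + g * d ^ 2 * T) by ring.
    apply (max_principle_abs alpha T _ _ _ _ _ _ _ alpha_pos
             (periodic_solution_comb alpha T 1 1 (-2) d _ _ _ _ _ HV)); auto.
    + intros y s Hs. unfold comb.
      replace (1 * G (y + d) s + 1 * G (y - d) s + -2 * G y s)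
        with (G (y + d) s + G (y - d) s - 2 * G y s) by ring.
      apply (G_bounded s Hs). lra.
    + intros y _. unfold comb.
      replace (1 * V (y + d) 0 + 1 * V (y - d) 0 + -2 * V y 0)
        with (V (y + d) 0 + V (y - d) 0 - 2 * V y 0) by ring.
      apply V0_bounded. lra.
Qed.

End SolutionBounds.

(** * Periodic extension of a solution of the linear problem *)

Definition periodize (W : R -> R -> R) (x t : R) : R := W (wrap x) t.

Lemma cont_rect_slice (T t : R) (w : R -> R -> R) : cont_rect T w -> 0 <= t <= T ->
  cont_on 0 (2 * PI) (fun y => w y t).
Proof.
  intros Hw Ht x Hx eps He. destruct (Hw x t Hx Ht eps He) as [d [Hd H]].
  exists d. split; [exact Hd|]. intros y Hy Hyx. apply H; auto.
  rewrite Rminus_eq_0, Rabs_R0. exact Hd.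
Qed.

Lemma cont_strip_periodize (T : R) (w : R -> R -> R) : cont_rect T w ->
  (forall t, 0 <= t <= T -> w 0 t = w (2 * PI) t) -> cont_strip T (periodize w).
Proof.
  intros Hw Hper x t Ht eps He. pose proof PI_gt_1 as HPI. pose proof (wrap_bounds x) as Hwx.
  destruct (wrap_local x) as [r [Hr Hloc]].
  destruct (Hw (wrap x) t ltac:(lra) Ht eps He) as [d0 [Hd0 H0]].
  destruct (Hw (2 * PI) t ltac:(lra) Ht eps He) as [d1 [Hd1 H1]].
  exists (Rmin r (Rmin d0 d1)). split; [repeat apply Rmin_pos; assumption|].
  intros y s Hs Hyx Hst. unfold periodize. pose proof (wrap_bounds y) as Hwy.
  apply Rmin_Rgt_l in Hyx as [Hyr Hyx]. apply Rmin_Rgt_l in Hyx as [Hy0 Hy1].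
  apply Rmin_Rgt_l in Hst as [_ Hst]. apply Rmin_Rgt_l in Hst as [Hs0 Hs1].
  destruct (Hloc y Hyr) as [E | [E0 E]].
  - apply H0; [lra | exact Hs | replace (wrap y - wrap x) with (y - x) by lra; lra | lra].
  - rewrite E0, (Hper t Ht).
    apply H1; [lra | exact Hs | replace (wrap y - 2 * PI) with (y - x) by lra; lra | lra].
Qed.

(* Difference quotients in time at x0 are limits of those at interior x,
   which the mean value theorem compares with the continuous wt. *)
Lemma C21_is_derive_t (T : R) (w wx wxx wt : R -> R -> R) : C21 T w wx wxx wt ->
  forall x0 t, 0 <= x0 <= 2 * PI -> 0 < t < T -> is_derive (fun s => w x0 s) t (wt x0 t).
Proof.
  intros [D [Hw [_ [_ Hwt]]]] x0 t Hx0 Ht. pose proof PI_gt_1.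
  apply is_derive_Reals. intros eps He.
  destruct (Hwt x0 t Hx0 ltac:(lra) (eps / 2) ltac:(lra)) as [d1 [Hd1 H1]].
  assert (Hdel : 0 < Rmin d1 (Rmin t (T - t))) by (repeat apply Rmin_pos; lra).
  exists (mkposreal _ Hdel). simpl. intros h Hh0 Hh.
  apply Rmin_Rgt_l in Hh as [Hh1 Hh]. apply Rmin_Rgt_l in Hh as [Hh2 Hh3].
  assert (Hth : 0 < t + h < T) by solve_abs.
  assert (Hah : 0 < Rabs h) by (apply Rabs_pos_lt; exact Hh0).
  assert (He' : 0 < eps / 4 * Rabs h) by nra.
  destruct (Hw x0 (t + h) Hx0 ltac:(lra) _ He') as [d2 [Hd2 H2]].
  destruct (Hw x0 t Hx0 ltac:(lra) _ He') as [d3 [Hd3 H3]].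
  destruct (near_interior (2 * PI) x0 (Rmin d1 (Rmin d2 d3)) ltac:(lra) Hx0
              ltac:(repeat apply Rmin_pos; lra)) as [x [Hx Hxx0]].
  apply Rmin_Rgt_l in Hxx0 as [Hx1 Hxx0]. apply Rmin_Rgt_l in Hxx0 as [Hx2 Hx3].
  destruct (MVT_open (fun s => w x s) (fun s => wt x s) 0 T) with (u := t) (v := t + h)
    as [c [Hc E]]; [intros s Hs; apply D; assumption | exact Ht | exact Hth |].
  assert (Hc' : t - Rabs h <= c <= t + Rabs h).
  { revert Hc. apply Rmin_case_strong; apply Rmax_case_strong; intros; solve_abs. }
  assert (A1 : Rabs (wt x c - wt x0 t) < eps / 2) by (apply H1; [lra | lra | lra | solve_abs]).
  assert (A2 : Rabs (w x (t + h) - w x0 (t + h)) < eps / 4 * Rabs h)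
    by (apply H2; [lra | lra | lra | rewrite Rminus_eq_0, Rabs_R0; lra]).
  assert (A3 : Rabs (w x t - w x0 t) < eps / 4 * Rabs h)
    by (apply H3; [lra | lra | lra | rewrite Rminus_eq_0, Rabs_R0; lra]).
  replace ((w x0 (t + h) - w x0 t) / h - wt x0 t) with
    ((wt x c - wt x0 t) - ((w x (t + h) - w x0 (t + h)) - (w x t - w x0 t)) / h).
  2:{ replace (wt x c) with ((w x (t + h) - w x t) / h) by (rewrite E; field; exact Hh0).
      field. exact Hh0. }
  eapply Rle_lt_trans; [apply Rabs_triang|]. rewrite Rabs_Ropp.
  unfold Rdiv. rewrite Rabs_mult, Rabs_inv.
  apply Rlt_le_trans with (eps / 2 + eps / 2); [|lra]. apply Rplus_lt_le_compat; [exact A1|].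
  apply Rmult_le_reg_r with (Rabs h); [exact Hah|].
  rewrite Rmult_assoc, Rinv_l, Rmult_1_r by lra.
  eapply Rle_trans; [apply Rabs_triang|]. rewrite Rabs_Ropp. lra.
Qed.

Lemma periodize_solution (alpha T : R) (v vx vxx vt g : R -> R -> R) :
  0 < alpha -> C21 T v vx vxx vt ->
  (forall x t, 0 <= x <= 2 * PI -> 0 <= t <= T -> vt x t - alpha * vxx x t = g x t) ->
  (forall t, 0 <= t <= T -> v 0 t = v (2 * PI) t /\ vx 0 t = vx (2 * PI) t) ->
  (forall t, 0 <= t <= T -> g 0 t = g (2 * PI) t) ->
  periodic_solution alpha T (periodize v) (periodize vx) (periodize vxx) (periodize vt)
    (periodize g).
Proof.
  intros Ha HC Heq Hbc Hg. pose proof PI_gt_1.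
  pose proof HC as [D [C0 [C1 [C2 _]]]].
  assert (Hvt : forall t, 0 < t < T -> vt 0 t = vt (2 * PI) t).
  { intros t Ht. apply (is_derive_eq (fun s => v 0 s) t).
    - apply (C21_is_derive_t T v vx vxx vt HC); [lra | exact Ht].
    - apply is_derive_ext_loc with (fun s => v (2 * PI) s).
      + apply (locally_interior 0 T); [exact Ht|]. intros s Hs. symmetry. apply Hbc. lra.
      + apply (C21_is_derive_t T v vx vxx vt HC); [lra | exact Ht]. }
  (* vxx is periodic because vt and g are, through the equation. *)
  assert (Hvxx : forall t, 0 < t < T -> vxx 0 t = vxx (2 * PI) t).
  { intros t Ht. pose proof (Heq 0 t ltac:(lra) ltac:(lra)).
    pose proof (Heq (2 * PI) t ltac:(lra) ltac:(lra)).
    rewrite Hvt, Hg in * by lra. apply Rmult_eq_reg_l with alpha; lra. }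
  split; unfold periodize.
  - intros x t _. rewrite wrap_add_2PI. reflexivity.
  - intros x t Ht. apply (is_derive_wrap (fun y => v y t) (fun y => vx y t)).
    + apply (cont_rect_slice T); [exact C0 | lra].
    + apply (cont_rect_slice T); [exact C1 | lra].
    + intros y Hy. apply D; assumption.
    + apply Hbc. lra.
    + apply Hbc. lra.
  - intros x t Ht. apply (is_derive_wrap (fun y => vx y t) (fun y => vxx y t)).
    + apply (cont_rect_slice T); [exact C1 | lra].
    + apply (cont_rect_slice T); [exact C2 | lra].
    + intros y Hy. apply D; assumption.
    + apply Hbc. lra.
    + apply Hvxx. exact Ht.
  - intros x t Ht. apply (C21_is_derive_t T v vx vxx vt HC); [|exact Ht].
    pose proof (wrap_bounds x). lra.
  - apply cont_strip_periodize; [exact C0|]. intros t Ht. apply Hbc. exact Ht.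
  - intros x t Ht. apply Heq; [pose proof (wrap_bounds x); lra | lra].
Qed.

(** * The nonlinearity *)

Lemma shift_wrap (h y t : R) (w : R -> R -> R) : 0 < h < 2 * PI -> 0 <= y < 2 * PI ->
  shift h w y t = w (wrap (y - h)) t.
Proof.
  intros Hh Hy. unfold shift. destruct Rlt_dec.
  - rewrite <- wrap_add_2PI, wrap_id by lra. reflexivity.
  - rewrite wrap_id by lra. reflexivity.
Qed.

Lemma Fop_wrap (h x t : R) (k : R -> R) (u : R -> R -> R) : 0 < h < 2 * PI ->
  Fop h k u (wrap x) t = u (wrap x) t * (k (wrap x) * u (wrap (x - h)) t - fnl h k u t).
Proof.
  intros Hh. unfold Fop. rewrite shift_wrap, wrap_wrap_sub by (apply wrap_bounds || exact Hh).
  reflexivity.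
Qed.

Lemma Fop_periodic_ends (h t : R) (k : R -> R) (u : R -> R -> R) : 0 < h < 2 * PI ->
  k 0 = k (2 * PI) -> u 0 t = u (2 * PI) t -> Fop h k u 0 t = Fop h k u (2 * PI) t.
Proof.
  intros Hh Hk Hu. unfold Fop, shift.
  destruct (Rlt_dec (0 - h) 0); [|lra]. destruct (Rlt_dec (2 * PI - h) 0); [lra|].
  rewrite Hu, Hk. replace (0 - h + 2 * PI) with (2 * PI - h) by ring. reflexivity.
Qed.

Lemma fnl_bound (h t kap a : R) (k : R -> R) (u : R -> R -> R) : 0 < h < 2 * PI ->
  (forall x, ex_derive (fun y => k (wrap y)) x) ->
  (forall x, ex_derive (fun y => u (wrap y) t) x) ->
  (forall x, Rabs (k (wrap x)) <= kap) -> (forall x, Rabs (u (wrap x) t) <= a) ->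
  Rabs (fnl h k u t) <= 8 * kap * a ^ 2.
Proof.
  intros Hh Dk Du Bk Bu. pose proof PI_gt_1. pose proof PI_4.
  set (g := fun y => k (wrap y) * u (wrap y) t * u (wrap (y - h)) t).
  unfold fnl. rewrite (RInt_ext _ g).
  2:{ intros x Hx. rewrite Rmin_left, Rmax_right in Hx by lra.
      unfold g. rewrite shift_wrap, (wrap_id x) by lra. reflexivity. }
  assert (Dg : forall x, ex_derive g x).
  { intros x. unfold g. apply ex_derive_mult; [apply ex_derive_mult; auto|].
    destruct (Du (x - h)) as [l Hl]. exists (1 * l).
    apply (is_derive_comp (fun y => u (wrap y) t) (fun y => y - h)); [exact Hl|].
    auto_derive; [exact I | ring]. }
  assert (Ig : ex_RInt g 0 (2 * PI)).
  { apply (ex_RInt_continuous (V := R_CompleteNormedModule)). intros z _.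
    apply (ex_derive_continuous g z (Dg z)). }
  assert (Hk : 0 <= kap) by (eapply Rle_trans; [apply Rabs_pos | apply (Bk 0)]).
  assert (Ha : 0 <= a) by (eapply Rle_trans; [apply Rabs_pos | apply (Bu 0)]).
  eapply Rle_trans; [apply (abs_RInt_le_const g 0 (2 * PI) (kap * a * a)); [lra | exact Ig |]|].
  - intros x _. unfold g. repeat apply Rabs_mult_le; auto.
  - assert (0 <= kap * a * a) by (repeat apply Rmult_le_pos; auto). simpl. nra.
Qed.

(* 28 dominates the constants produced by [diff_bounded_mul] and
   [diff_bounded_add] once every power of a is raised to a^3 (using 1 <= a). *)
Lemma diff_bounded_logistic (U K : R -> R) (h c kap a : R) :
  diff_bounded a a (2 * a) U -> diff_bounded kap kap (2 * kap) K ->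
  Rabs c <= 8 * kap * a ^ 2 -> 1 <= a -> 0 <= kap ->
  diff_bounded (28 * kap * a ^ 3) (28 * kap * a ^ 3) (28 * kap * a ^ 3)
    (fun x => U x * (K x * U (x - h) - c)).
Proof.
  intros HU HK Hc Ha Hk.
  pose proof (diff_bounded_mul _ _ _ _ _ _ _ _ HK (diff_bounded_shift _ _ _ h U HU)) as H1.
  pose proof (diff_bounded_add _ _ _ _ _ _ _ _ H1
                (diff_bounded_const (- c) _ ltac:(rewrite Rabs_Ropp; exact Hc))) as H2.
  pose proof (diff_bounded_mul _ _ _ _ _ _ _ _ HU H2) as H3.
  apply (diff_bounded_ext _ _ _ (fun x => U x * (K x * U (x - h) + - c)));
    [intros x; ring|].
  assert (Ha2 : kap * a ^ 2 <= kap * a ^ 3) by (apply Rmult_le_compat_l; [exact Hk | simpl; nra]).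
  assert (Ha3 : 0 <= kap * a ^ 3) by (apply Rmult_le_pos; [exact Hk | apply pow_le; lra]).
  apply (diff_bounded_weaken _ _ _ _ _ _ _ H3); simpl in *; nra.
Qed.

Lemma Fop_diff_bounded (h t kap a : R) (k : R -> R) (u : R -> R -> R) :
  0 < h < 2 * PI -> 1 <= a -> 0 <= kap ->
  diff_bounded kap kap (2 * kap) (fun x => k (wrap x)) ->
  (forall x, ex_derive (fun y => k (wrap y)) x) ->
  diff_bounded a a (2 * a) (fun x => u (wrap x) t) ->
  (forall x, ex_derive (fun y => u (wrap y) t) x) ->
  diff_bounded (28 * kap * a ^ 3) (28 * kap * a ^ 3) (28 * kap * a ^ 3)
    (fun x => Fop h k u (wrap x) t).
Proof.
  intros Hh Ha Hk HK DK HU DU.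
  apply (diff_bounded_ext _ _ _
           (fun x => u (wrap x) t * (k (wrap x) * u (wrap (x - h)) t - fnl h k u t))).
  { intros x. rewrite Fop_wrap by exact Hh. reflexivity. }
  apply (diff_bounded_logistic (fun x => u (wrap x) t) (fun x => k (wrap x))); auto.
  apply fnl_bound; auto; [apply (proj1 HK) | apply (proj1 HU)].
Qed.

(** * The iteration *)

Definition C21_periodic_bounded (T a b : R) (w : R -> R -> R) : Prop :=
  exists wx wxx wt, C21 T w wx wxx wt /\
    (forall t, 0 <= t <= T -> w 0 t = w (2 * PI) t /\ wx 0 t = wx (2 * PI) t) /\
    (forall x t, 0 <= x <= 2 * PI -> 0 <= t <= T ->
       Rabs (w x t) <= a /\ Rabs (wx x t) <= a /\ Rabs (wxx x t) <= a /\ Rabs (wt x t) <= b).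

Lemma C21_slice (T t : R) (w wx wxx wt : R -> R -> R) : C21 T w wx wxx wt -> 0 < t < T ->
  C2_on 0 (2 * PI) (fun y => w y t) (fun y => wx y t) (fun y => wxx y t).
Proof.
  intros [D [C0 [C1 [C2 _]]]] Ht.
  split; [|repeat split; apply (cont_rect_slice T); assumption || lra].
  intros x Hx. destruct (D x t Hx Ht) as [D1 [D2 _]]. split; assumption.
Qed.

Lemma cont_rect_of_cont_on (T : R) (w : R -> R -> R) (f : R -> R) : cont_on 0 (2 * PI) f ->
  (forall x t, 0 <= x <= 2 * PI -> 0 <= t <= T -> w x t = f x) -> cont_rect T w.
Proof.
  intros Hf E x t Hx Ht eps He. destruct (Hf x Hx eps He) as [d [Hd H]].
  exists d. split; [exact Hd|]. intros y s Hy Hs Hyx _.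
  rewrite !E by assumption. apply H; assumption.
Qed.

Lemma C21_periodic_bounded_initial (T a b : R) (phi phi1 phi2 : R -> R) (u0 : R -> R -> R) :
  0 <= b -> C2_on 0 (2 * PI) phi phi1 phi2 -> phi 0 = phi (2 * PI) -> phi1 0 = phi1 (2 * PI) ->
  (forall x, 0 <= x <= 2 * PI -> Rabs (phi x) <= a /\ Rabs (phi1 x) <= a /\ Rabs (phi2 x) <= a) ->
  (forall x t, 0 <= x <= 2 * PI -> 0 <= t <= T -> u0 x t = phi x) ->
  C21_periodic_bounded T a b u0.
Proof.
  intros Hb [D [C0 [C1 C2]]] P0 P1 Hphi Hu0. pose proof PI_gt_1.
  exists (fun x _ => phi1 x), (fun x _ => phi2 x), (fun _ _ => 0).
  split; [split; [|repeat split]|split].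
  - intros x t Hx Ht. split; [|split]; [| apply D; exact Hx |].
    + apply is_derive_ext_loc with phi; [|apply D; exact Hx].
      apply (locally_interior 0 (2 * PI)); [exact Hx|].
      intros y Hy. symmetry. apply Hu0; lra.
    + apply is_derive_ext_loc with (fun _ => phi x); [|auto_derive; [exact I | ring]].
      apply (locally_interior 0 T); [exact Ht|]. intros s Hs. symmetry. apply Hu0; lra.
  - apply (cont_rect_of_cont_on T _ phi C0). exact Hu0.
  - apply (cont_rect_of_cont_on T _ phi1 C1). reflexivity.
  - apply (cont_rect_of_cont_on T _ phi2 C2). reflexivity.
  - apply (cont_rect_of_cont_on T _ (fun _ => 0)); [|reflexivity].
    intros x _ eps He. exists 1. split; [lra|]. intros. rewrite Rminus_eq_0, Rabs_R0. exact He.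
  - intros t Ht. rewrite !Hu0 by lra. split; assumption.
  - intros x t Hx Ht. rewrite Hu0, Rabs_R0 by assumption. destruct (Hphi x Hx) as [? [? ?]]. auto.
Qed.

(* Derivative witnesses are unique only in the interior; the bounds reach the
   boundary by continuity. *)
Lemma C21_periodic_bounded_pt (T a b : R) (w wx wxx wt : R -> R -> R) : 0 < T ->
  C21_periodic_bounded T a b w -> C21 T w wx wxx wt ->
  forall x t, 0 <= x <= 2 * PI -> 0 <= t <= T -> C21_pt w wx wxx wt x t <= a + a + a + b.
Proof.
  intros HT [vx [vxx [vt [HCv [_ Hb]]]]] HC x t Hx Ht.
  pose proof HC as [_ [_ [C1 [C2 C3]]]].
  assert (Hint : forall y s, 0 < y < 2 * PI -> 0 < s < T ->
            Rabs (wx y s) <= a /\ Rabs (wxx y s) <= a /\ Rabs (wt y s) <= b).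
  { intros y s Hy Hs.
    destruct (C21_interior_unique T w wx wxx wt vx vxx vt HC HCv y s Hy Hs) as [-> [-> ->]].
    destruct (Hb y s ltac:(lra) ltac:(lra)) as [_ [B1 [B2 B3]]]. auto. }
  unfold C21_pt. destruct (Hb x t Hx Ht) as [B0 _].
  assert (Bx : Rabs (wx x t) <= a)
    by (apply (cont_rect_bound_closure T a wx HT C1); auto; intros; apply Hint; assumption).
  assert (Bxx : Rabs (wxx x t) <= a)
    by (apply (cont_rect_bound_closure T a wxx HT C2); auto; intros; apply Hint; assumption).
  assert (Bt : Rabs (wt x t) <= b)
    by (apply (cont_rect_bound_closure T b wt HT C3); auto; intros; apply Hint; assumption).
  lra.
Qed.

Section Step.

Variables h alpha T p kap : R.
Variables phi phi1 phi2 k k1 k2 : R -> R.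
Hypothesis h_range : 0 < h < 2 * PI.
Hypothesis alpha_pos : 0 < alpha.
Hypothesis T_pos : 0 < T.
Hypothesis p_ge1 : 1 <= p.
Hypothesis kap_ge0 : 0 <= kap.
Hypothesis kap_small : 28 * kap * (3 * p) ^ 3 * T <= p.
Hypothesis phi_C2 : C2_on 0 (2 * PI) phi phi1 phi2.
Hypothesis phi_per : phi 0 = phi (2 * PI).
Hypothesis phi1_per : phi1 0 = phi1 (2 * PI).
Hypothesis phi_bound : forall x, 0 <= x <= 2 * PI ->
  Rabs (phi x) <= p /\ Rabs (phi1 x) <= p /\ Rabs (phi2 x) <= p.
Hypothesis k_C2 : C2_on 0 (2 * PI) k k1 k2.
Hypothesis k_per : k 0 = k (2 * PI).
Hypothesis k1_per : k1 0 = k1 (2 * PI).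
Hypothesis k_bound : forall x, 0 <= x <= 2 * PI ->
  Rabs (k x) <= kap /\ Rabs (k1 x) <= kap /\ Rabs (k2 x) <= kap.

Lemma k_wrap_derivable (x : R) : ex_derive (fun y => k (wrap y)) x.
Proof.
  exists (k1 (wrap x)). pose proof k_C2 as [D [C0 [C1 _]]].
  apply is_derive_wrap; auto. intros; apply D; assumption.
Qed.

Lemma Fop_bounded (b : R) (um : R -> R -> R) : C21_periodic_bounded T (3 * p) b um ->
  forall t, 0 < t < T ->
    diff_bounded (28 * kap * (3 * p) ^ 3) (28 * kap * (3 * p) ^ 3) (28 * kap * (3 * p) ^ 3)
      (fun x => Fop h k um (wrap x) t).
Proof.
  intros [ux [uxx [ut [HC [Hper Hb]]]]] t Ht. pose proof (C21_slice T t _ _ _ _ HC Ht) as Hs.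
  pose proof Hs as [D [C0 [C1 _]]].
  apply Fop_diff_bounded; auto using k_wrap_derivable; [lra | | |].
  - apply (diff_bounded_wrap _ _ _ _ _ _ k_C2 k_per k1_per k_bound).
  - apply (diff_bounded_wrap _ _ _ _ _ _ Hs); try apply Hper; try lra.
    intros x Hx. destruct (Hb x t Hx ltac:(lra)) as [B0 [B1 [B2 _]]]. auto.
  - intros x. exists (ux (wrap x) t).
    apply (is_derive_wrap (fun y => um y t) (fun y => ux y t)); auto;
      [intros; apply D; assumption | | ]; apply Hper; lra.
Qed.

Lemma C21_periodic_bounded_step (b : R) (um v : R -> R -> R) :
  C21_periodic_bounded T (3 * p) b um -> is_lin_solution alpha T phi (Fop h k um) v ->
  C21_periodic_bounded T (3 * p) (alpha * (3 * p) + p / T) v.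
Proof.
  intros Hum [vx [vxx [vt [HC [Heq [Hin Hbc]]]]]]. pose proof PI_gt_1.
  pose proof (Fop_bounded b um Hum) as HF.
  set (g := 28 * kap * (3 * p) ^ 3) in *.
  assert (Hg : g <= p / T) by (apply Rmult_le_reg_r with T; [lra|]; field_simplify; lra).
  destruct Hum as [ux [uxx [ut [HCu [Hper _]]]]].
  assert (HV := periodize_solution alpha T v vx vxx vt (Fop h k um) alpha_pos HC Heq Hbc
                  ltac:(intros t Ht; apply Fop_periodic_ends; auto; apply Hper; exact Ht)).
  assert (H0 : diff_bounded p p (2 * p) (fun x => periodize v x 0)).
  { apply (diff_bounded_ext _ _ _ (fun x => phi (wrap x))).
    - intros y. unfold periodize. symmetry. apply Hin. pose proof (wrap_bounds y). lra.
    - apply (diff_bounded_wrap _ _ _ _ _ _ phi_C2 phi_per phi1_per phi_bound). }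
  assert (Hint : forall x t, 0 < x < 2 * PI -> 0 < t < T ->
            Rabs (v x t) <= 3 * p /\ Rabs (vx x t) <= 3 * p /\ Rabs (vxx x t) <= 3 * p /\
            Rabs (vt x t) <= alpha * (3 * p) + p / T).
  { intros x t Hx Ht.
    assert (Hx' : 0 <= x <= 2 * PI) by lra.
    pose proof (periodic_solution_bound _ _ _ _ _ _ _ _ _ alpha_pos HV HF H0 x t Hx' Ht) as B0.
    pose proof (periodic_solution_dx_bound _ _ _ _ _ _ _ _ _ alpha_pos HV HF H0 x t Hx' Ht) as B1.
    pose proof (periodic_solution_dxx_bound _ _ _ _ _ _ _ _ _ alpha_pos HV HF H0 x t Hx' Ht) as B2.
    unfold periodize in B0, B1, B2. rewrite wrap_id in B0, B1, B2 by lra.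
    assert (BF : Rabs (Fop h k um x t) <= g) by (rewrite <- (wrap_id x) by lra; apply (HF t Ht)).
    repeat split; try lra.
    replace (vt x t) with (alpha * vxx x t + Fop h k um x t) by (rewrite <- Heq; lra).
    eapply Rle_trans; [apply Rabs_triang|]. rewrite Rabs_mult, (Rabs_pos_eq alpha) by lra.
    apply Rplus_le_compat; [apply Rmult_le_compat_l|]; lra. }
  pose proof HC as [_ [C0 [C1 [C2 C3]]]].
  exists vx, vxx, vt. split; [exact HC|]. split; [exact Hbc|].
  intros x t Hx Ht. repeat split; apply (cont_rect_bound_closure T _ _ T_pos);
    try eassumption; intros y s Hy Hs; apply Hint; assumption.
Qed.

Lemma C21_periodic_bounded_iterates (u : nat -> R -> R -> R) :
  (forall x t, 0 <= x <= 2 * PI -> 0 <= t <= T -> u O x t = phi x) ->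
  (forall m, is_lin_solution alpha T phi (Fop h k (u m)) (u (S m))) ->
  forall m, C21_periodic_bounded T (3 * p) (alpha * (3 * p) + p / T) (u m).
Proof.
  intros Hu0 Hus m. induction m as [|m IH].
  - apply (C21_periodic_bounded_initial T _ _ phi phi1 phi2); auto.
    + assert (0 <= p / T) by (apply Rdiv_le_0_compat; lra). nra.
    + intros x Hx. destruct (phi_bound x Hx) as [? [? ?]]. repeat split; lra.
  - exact (C21_periodic_bounded_step _ (u m) (u (S m)) IH (Hus m)).
Qed.

End Step.

(** * The initial datum and the kernel *)

Lemma C2_on_restrict (a b c d : R) (f f1 f2 : R -> R) :
  a <= c -> d <= b -> C2_on a b f f1 f2 -> C2_on c d f f1 f2.
Proof.
  intros Hac Hdb [D [C0 [C1 C2]]].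
  split; [intros x Hx; apply D; lra|].
  repeat split; apply (cont_on_sub a b); assumption.
Qed.

(* Differentiating phi = phi(. + 2 pi) on (-h, 0) gives phi1 = phi1(. + 2 pi)
   there; letting x tend to 0 from the left gives phi1 0 = phi1 (2 pi). *)
Lemma periodic_derivative_ends (h : R) (phi phi1 phi2 : R -> R) : 0 < h < 2 * PI ->
  C2_on (- h) (2 * PI) phi phi1 phi2 ->
  (forall x, - h <= x <= 0 -> phi x = phi (x + 2 * PI)) -> phi1 0 = phi1 (2 * PI).
Proof.
  intros Hh [D [_ [C1 _]]] Hper. pose proof PI_gt_1.
  assert (Hd1 : forall x, - h < x < 0 -> phi1 x = phi1 (x + 2 * PI)).
  { intros x Hx. apply (is_derive_eq phi x); [apply D; lra|].
    apply is_derive_ext_loc with (fun y => phi (y + 2 * PI)).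
    - apply (locally_interior (- h) 0); [exact Hx|]. intros y Hy. symmetry. apply Hper. lra.
    - replace (phi1 (x + 2 * PI)) with (1 * phi1 (x + 2 * PI)) by ring.
      apply (is_derive_comp phi (fun y => y + 2 * PI)); [apply D; lra|].
      auto_derive; [exact I | ring]. }
  apply cond_eq. intros eps He.
  destruct (C1 0 ltac:(lra) (eps / 2) ltac:(lra)) as [d0 [Hd0 H0]].
  destruct (C1 (2 * PI) ltac:(lra) (eps / 2) ltac:(lra)) as [d2 [Hd2 H2]].
  set (x := - Rmin h (Rmin d0 d2) / 2).
  assert (Hx : 0 < - x < h /\ - x < d0 /\ - x < d2).
  { unfold x. pose proof (Rmin_l h (Rmin d0 d2)). pose proof (Rmin_r h (Rmin d0 d2)).
    pose proof (Rmin_l d0 d2). pose proof (Rmin_r d0 d2).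
    pose proof (Rmin_pos h (Rmin d0 d2) ltac:(lra) ltac:(apply Rmin_pos; lra)). lra. }
  specialize (H0 x ltac:(lra) ltac:(rewrite Rminus_0_r; solve_abs)).
  specialize (H2 (x + 2 * PI) ltac:(lra)
                ltac:(replace (x + 2 * PI - 2 * PI) with x by ring; solve_abs)).
  rewrite <- Hd1 in H2 by lra. solve_abs.
Qed.
Lemma Rmax3_lt (a b c d : R) : Rmax a (Rmax b c) < d -> a <= d /\ b <= d /\ c <= d.
Proof.
  intros H. pose proof (Rmax_l a (Rmax b c)). pose proof (Rmax_r a (Rmax b c)).
  pose proof (Rmax_l b c). pose proof (Rmax_r b c). repeat split; lra.
Qed.

Lemma C2_on_bounded (a b : R) (f f1 f2 : R -> R) : a <= b -> C2_on a b f f1 f2 ->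
  exists p, 1 <= p /\ forall x, a <= x <= b ->
    Rabs (f x) <= p /\ Rabs (f1 x) <= p /\ Rabs (f2 x) <= p.
Proof.
  intros Hab [_ [C0 [C1 C2]]].
  destruct (cont_on_bounded a b f Hab C0) as [M0 H0].
  destruct (cont_on_bounded a b f1 Hab C1) as [M1 H1].
  destruct (cont_on_bounded a b f2 Hab C2) as [M2 H2].
  exists (Rmax 1 (Rmax M0 (Rmax M1 M2))). split; [apply Rmax_l|].
  intros x Hx. specialize (H0 x Hx). specialize (H1 x Hx). specialize (H2 x Hx).
  pose proof (Rmax_r 1 (Rmax M0 (Rmax M1 M2))). pose proof (Rmax_l M0 (Rmax M1 M2)).
  pose proof (Rmax_r M0 (Rmax M1 M2)). pose proof (Rmax_l M1 M2). pose proof (Rmax_r M1 M2).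
  repeat split; lra.
Qed.

Theorem lemma2 :
  forall (h alpha T : R) (phi phi1 phi2 : R -> R),
    0 < h < 2 * PI -> 0 < alpha -> 0 < T ->
    C2_on (- h) (2 * PI) phi phi1 phi2 ->
    (forall x, - h <= x <= 2 * PI -> 0 <= phi x) ->
    RInt phi 0 (2 * PI) = 1 ->
    (forall x, - h <= x <= 0 -> phi x = phi (x + 2 * PI)) ->
  exists delta : R, 0 < delta /\
  forall (k k1 k2 : R -> R),
    C2_on 0 (2 * PI) k k1 k2 ->
    (forall x, 0 <= x <= 2 * PI -> 0 < k x) ->
    k 0 = k (2 * PI) -> k1 0 = k1 (2 * PI) ->
    (* kbar = max_{[0,2pi]} max(|k|,|k'|,|k''|) < delta *)
    (forall x, 0 <= x <= 2 * PI ->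
       Rmax (Rabs (k x)) (Rmax (Rabs (k1 x)) (Rabs (k2 x))) < delta) ->
  forall u : nat -> R -> R -> R,
    (forall x t, 0 <= x <= 2 * PI -> 0 <= t <= T -> u O x t = phi x) ->
    (forall m, is_lin_solution alpha T phi (Fop h k (u m)) (u (S m))) ->
  exists M : R, forall (m : nat) (wx wxx wt : R -> R -> R),
    C21 T (u m) wx wxx wt ->
    forall x t, 0 <= x <= 2 * PI -> 0 <= t <= T ->
      C21_pt (u m) wx wxx wt x t <= M.
Proof.
  intros h alpha T phi phi1 phi2 Hh Ha HT Hphi _ _ Hper. pose proof PI_gt_1.
  assert (Hphi0 := C2_on_restrict (- h) (2 * PI) 0 (2 * PI) _ _ _ ltac:(lra) ltac:(lra) Hphi).
  assert (P0 : phi 0 = phi (2 * PI)) by (rewrite (Hper 0) by lra; f_equal; ring).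
  pose proof (periodic_derivative_ends h phi phi1 phi2 Hh Hphi Hper) as P1.
  destruct (C2_on_bounded 0 (2 * PI) _ _ _ ltac:(lra) Hphi0) as [p [Hp1 Hp]].
  assert (Hdelta : 0 < p / (28 * (3 * p) ^ 3 * T)).
  { apply Rdiv_lt_0_compat; [lra|]. apply Rmult_lt_0_compat; [|exact HT].
    apply Rmult_lt_0_compat; [lra | apply pow_lt; lra]. }
  exists (p / (28 * (3 * p) ^ 3 * T)). split; [exact Hdelta|].
  intros k k1 k2 Hk _ Hk0 Hk1 Hkb u Hu0 Hus.
  exists (3 * p + 3 * p + 3 * p + (alpha * (3 * p) + p / T)).
  intros m wx wxx wt HC. apply (C21_periodic_bounded_pt T); [exact HT | | exact HC].
  apply (C21_periodic_bounded_iterates h alpha T p (p / (28 * (3 * p) ^ 3 * T))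
           phi phi1 phi2 k k1 k2); auto.
  - lra.
  - right. field. lra.
  - intros x Hx. apply Rmax3_lt, Hkb, Hx.
Qed.
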